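(* Let $f(x,y)=\tfrac12(x^2+y^2)$ and let $p_1,\dots,p_n\in Q$ be pairwise distinct with $M_{W_i}>0$. Then the performance function $$\mathcal H(p_1,\dots,p_n)=\int_Q\min_{(a,b)\in C}\tfrac12\big(\|q-p_a\|^2+\|q-p_b\|^2\big)\phi(q)\,dq$$ satisfies $$\frac{\partial\mathcal H}{\partial p_i}=-\sum_{\mathcal T_{ij}\in\mathcal P_i}M_{V_{\mathcal T_{ij}}}\big(C_{V_{\mathcal T_{ij}}}-p_i\big)=-M_{W_i}\,(C_{W_i}-p_i).$$
   Context: $Q\subset\mathbb{R}^2$ is a compact convex polygon, $\phi:Q\to[0,\infty)$ a $C^2$ density, $n\ge3$, $C=\{(a,b):1\le a<b\le n\}$. For $i\neq j$, $V_{\mathcal T_{ij}}=\{q\in Q:\|q-p_v\|\le\|q-p_w\|\ \forall v\in\{i,j\},\ w\notin\{i,j\}\}$ is the order-2 Voronoi cell generated by $\{p_i,p_j\}$; $\mathcal P_i$ is the collection of all such cells' generating pairs containing $i$. Mass and centroid: $M_{V}=\int_V\phi(q)dq$, $C_V=\frac{1}{M_V}\int_V q\phi(q)dq$. $W_i=\bigcup_{\mathcal T_{ij}\in\mathcal P_i}V_{\mathcal T_{ij}}$, $M_{W_i}=\sum_{\mathcal T_{ij}\in\mathcal P_i}M_{V_{\mathcal T_{ij}}}$, $C_{W_i}=\frac{1}{M_{W_i}}\sum_{\mathcal T_{ij}\in\mathcal P_i}M_{V_{\mathcal T_{ij}}}C_{V_{\mathcal T_{ij}}}$. *)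

From Stdlib Require Import Reals Lra List ClassicalEpsilon.
Open Scope R_scope.

Definition pt := (R * R)%type.
Definition vadd (u v : pt) : pt := (fst u + fst v, snd u + snd v).
Definition vsub (u v : pt) : pt := (fst u - fst v, snd u - snd v).
Definition vscal (c : R) (u : pt) : pt := (c * fst u, c * snd u).
Definition vopp (u : pt) : pt := vscal (-1) u.
Definition vnorm (u : pt) : R := sqrt (fst u ^ 2 + snd u ^ 2).

Definition sumR (l : list nat) (F : nat -> R) : R :=
  fold_right (fun j acc => F j + acc) 0 l.
Definition sumV (l : list nat) (F : nat -> pt) : pt :=
  fold_right (fun j acc => vadd (F j) acc) (0, 0) l.

Fixpoint lincomb (w : list R) (vs : list pt) : pt :=
  match w, vs with
  | c :: w', v :: vs' => vadd (vscal c v) (lincomb w' vs')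
  | _, _ => (0, 0)
  end.
Definition in_hull (vs : list pt) (q : pt) : Prop :=
  exists w : list R, length w = length vs /\ Forall (fun c => 0 <= c) w /\
    fold_right Rplus 0 w = 1 /\ q = lincomb w vs.
Definition is_convex_polygon (Q : pt -> Prop) : Prop :=
  exists vs : list pt, (forall q, Q q <-> in_hull vs q) /\
    exists q0 r, 0 < r /\ forall q, vnorm (vsub q q0) < r -> Q q.

Definition continuous2 (g : pt -> R) : Prop :=
  forall q eps, 0 < eps -> exists del, 0 < del /\
    forall q', vnorm (vsub q' q) < del -> Rabs (g q' - g q) < eps.
Definition C1_2 (g : pt -> R) : Prop :=
  exists gx gy : pt -> R,
    (forall x y, derivable_pt_lim (fun t => g (t, y)) x (gx (x, y))) /\
    (forall x y, derivable_pt_lim (fun t => g (x, t)) y (gy (x, y))) /\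
    continuous2 g /\ continuous2 gx /\ continuous2 gy.
Definition C2_2 (g : pt -> R) : Prop :=
  exists gx gy : pt -> R,
    (forall x y, derivable_pt_lim (fun t => g (t, y)) x (gx (x, y))) /\
    (forall x y, derivable_pt_lim (fun t => g (x, t)) y (gy (x, y))) /\
    continuous2 g /\ C1_2 gx /\ C1_2 gy.

(* Integral over R^2 of a compactly supported function, as iterated
   Riemann integral over a box containing the support. *)
Definition Int2 (g : pt -> R) (I : R) : Prop :=
  exists a b c d, a <= b /\ c <= d /\
    (forall x y, ~ (a <= x <= b /\ c <= y <= d) -> g (x, y) = 0) /\
    exists F : R -> R,
      (forall x, a <= x <= b ->
         exists pr : Riemann_integrable (fun y => g (x, y)) c d,
           RiemannInt pr = F x) /\
      exists pr : Riemann_integrable F a b, RiemannInt pr = I.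
Definition integral2 (g : pt -> R) : R :=
  epsilon (inhabits 0) (fun I => Int2 g I).

Definition ind (S : pt -> Prop) (q : pt) : R :=
  if excluded_middle_informative (S q) then 1 else 0.

(* integral over a set S (used only for S ⊆ Q, compact) *)
Definition integral_on (S : pt -> Prop) (g : pt -> R) : R :=
  integral2 (fun q => ind S q * g q).

(* Indices 0..n-1 (the paper's 1..n). *)
Definition V2 (Q : pt -> Prop) (n : nat) (p : nat -> pt) (i j : nat) (q : pt) : Prop :=
  Q q /\ forall v w, (v = i \/ v = j) -> (w < n)%nat -> w <> i -> w <> j ->
    vnorm (vsub q (p v)) <= vnorm (vsub q (p w)).

Definition mass (Q : pt -> Prop) (phi : pt -> R) (n : nat) (p : nat -> pt) (i j : nat) : R :=
  integral_on (V2 Q n p i j) phi.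
Definition centroid (Q : pt -> Prop) (phi : pt -> R) (n : nat) (p : nat -> pt) (i j : nat) : pt :=
  vscal (/ mass Q phi n p i j)
    (integral_on (V2 Q n p i j) (fun q => fst q * phi q),
     integral_on (V2 Q n p i j) (fun q => snd q * phi q)).

(* The pairs {i,j} in P_i, indexed by j ∈ {0..n-1} \ {i}. *)
Definition others (n i : nat) : list nat := filter (fun j => negb (Nat.eqb j i)) (seq 0 n).

Definition massW (Q : pt -> Prop) (phi : pt -> R) (n : nat) (p : nat -> pt) (i : nat) : R :=
  sumR (others n i) (fun j => mass Q phi n p i j).
Definition centroidW (Q : pt -> Prop) (phi : pt -> R) (n : nat) (p : nat -> pt) (i : nat) : pt :=
  vscal (/ massW Q phi n p i)
    (sumV (others n i) (fun j => vscal (mass Q phi n p i j) (centroid Q phi n p i j))).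

Definition f (x y : R) : R := / 2 * (x ^ 2 + y ^ 2).

Definition pairsC (n : nat) : list (nat * nat) :=
  flat_map (fun b => map (fun a => (a, b)) (seq 0 b)) (seq 0 n).

(* min over (a,b) in C of f(||q-p_a||, ||q-p_b||); the pair (0,1) ∈ C when n >= 2 *)
Definition minC (n : nat) (p : nat -> pt) (q : pt) : R :=
  fold_right (fun ab acc => Rmin (f (vnorm (vsub q (p (fst ab)))) (vnorm (vsub q (p (snd ab))))) acc)
    (f (vnorm (vsub q (p 0%nat))) (vnorm (vsub q (p 1%nat)))) (pairsC n).

Definition H (Q : pt -> Prop) (phi : pt -> R) (n : nat) (p : nat -> pt) : R :=
  integral_on Q (fun q => minC n p q * phi q).

Definition upd (p : nat -> pt) (i : nat) (v : pt) : nat -> pt :=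
  fun k => if Nat.eqb k i then v else p k.

(* Move p_i to p_i + t e.  At a point q the integrand of H is half the sum of the squared
   distances from q to its two nearest generators.  If the squared distances from q to the
   generators are pairwise more than |Delta| apart, where Delta = O(|t|) is the change of
   |q - p_i|^2, then q has the same two nearest generators before and after the move, and the
   integrand changes by Delta / 2 = t (p_i - q).e + O(t^2) when i is one of them, i.e. when q lies
   in a cell V_{T_ij}, and not at all otherwise.  The other points lie in strips of width O(|t|)
   around the perpendicular bisectors of pairs of generators, of total area O(|t|), where the
   integrand moves by O(|t|).  Hence H(p_t) = H(p) + t sum_j int_{V_ij} (p_i - q).e phi + O(t^2),
   and int_{V_ij} (p_i - q) phi = M_{V_ij} (p_i - C_{V_ij}).

   All integrals are iterated Riemann integrals of a continuous function times the indicator of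
   a convex set: the vertical sections of a convex set are intervals whose ends are concave and
   convex functions of x, hence continuous inside its shadow. *)

From Coquelicot Require Import Coquelicot.
From Stdlib Require Import Reals Lra Lia List ClassicalEpsilon FunctionalExtensionality.
Open Scope R_scope.

(** * Iterated integrals over a box *)

Definition box_int (a b c d : R) (g : pt -> R) (I : R) : Prop :=
  a <= b /\ c <= d /\ (forall x y, ~ (a <= x <= b /\ c <= y <= d) -> g (x,y) = 0) /\
  (forall x, a <= x <= b -> ex_RInt (fun y => g (x,y)) c d) /\
  ex_RInt (fun x => RInt (fun y => g (x,y)) c d) a b /\
  RInt (fun x => RInt (fun y => g (x,y)) c d) a b = I.

Lemma RInt_cst (v a b : R) : RInt (fun _ => v) a b = v * (b - a).
Proof. rewrite RInt_const. unfold scal; simpl; unfold mult; simpl. ring. Qed.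

Lemma RInt_eq0 (h : R -> R) a b : (forall x, Rmin a b < x < Rmax a b -> h x = 0) ->
  ex_RInt h a b /\ RInt h a b = 0.
Proof.
  intros Hz. split.
  - apply ex_RInt_ext with (fun _ => 0); [intros; symmetry; auto | apply ex_RInt_const].
  - rewrite (RInt_ext h (fun _ => 0)) by auto. rewrite RInt_cst. apply Rmult_0_l.
Qed.

Lemma box_int_Int2 a b c d g I : box_int a b c d g I -> Int2 g I.
Proof.
  intros (Hab & Hcd & Hs & Hi & Ho & HI).
  exists a, b, c, d. do 3 (split; [assumption|]).
  exists (fun x => RInt (fun y => g (x,y)) c d). split.
  - intros x Hx. exists (ex_RInt_Reals_0 _ _ _ (Hi x Hx)). symmetry; apply RInt_Reals.
  - exists (ex_RInt_Reals_0 _ _ _ Ho). rewrite <- RInt_Reals. exact HI.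
Qed.

Lemma Int2_box_int g I : Int2 g I -> exists a b c d, box_int a b c d g I.
Proof.
  intros (a & b & c & d & Hab & Hcd & Hs & F & HF & pr & Hpr).
  exists a, b, c, d. do 3 (split; [assumption|]).
  assert (HF' : forall x, a <= x <= b ->
    ex_RInt (fun y => g (x,y)) c d /\ RInt (fun y => g (x,y)) c d = F x).
  { intros x Hx. destruct (HF x Hx) as [prx Hx']. split.
    - apply ex_RInt_Reals_1; exact prx.
    - rewrite (RInt_Reals _ _ _ prx). exact Hx'. }
  split; [intros x Hx; apply (HF' x Hx)|].
  assert (E : forall x, Rmin a b < x < Rmax a b -> F x = RInt (fun y => g (x,y)) c d).
  { intros x Hx. rewrite Rmin_left, Rmax_right in Hx by lra. symmetry; apply HF'; lra. }
  split.
  - apply ex_RInt_ext with F; [exact E|]. apply ex_RInt_Reals_1; exact pr.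
  - rewrite <- (RInt_ext F) by exact E. rewrite (RInt_Reals _ _ _ pr). exact Hpr.
Qed.

Lemma RInt_widen (h : R -> R) a b a' b' : a' <= a -> a <= b -> b <= b' ->
  (forall x, x < a -> h x = 0) -> (forall x, b < x -> h x = 0) ->
  ex_RInt h a b -> ex_RInt h a' b' /\ RInt h a' b' = RInt h a b.
Proof.
  intros H1 H2 H3 Hl Hr He.
  destruct (RInt_eq0 h a' a) as [E1 V1].
  { intros x Hx. rewrite Rmax_right in Hx by lra. apply Hl; lra. }
  destruct (RInt_eq0 h b b') as [E2 V2].
  { intros x Hx. rewrite Rmin_left in Hx by lra. apply Hr; lra. }
  assert (E3 : ex_RInt h a' b) by (apply ex_RInt_Chasles with a; auto).
  split; [apply ex_RInt_Chasles with b; auto|].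
  rewrite <- (RInt_Chasles h a' b b'), <- (RInt_Chasles h a' a b) by auto.
  rewrite V1, V2. unfold plus; simpl. ring.
Qed.

Lemma box_int_widen a b c d a' b' c' d' g I : a' <= a -> b <= b' -> c' <= c -> d <= d' ->
  box_int a b c d g I -> box_int a' b' c' d' g I.
Proof.
  intros Ha Hb Hc Hd (Hab & Hcd & Hs & Hi & Ho & HI).
  set (F := fun x => if Rle_dec a x then if Rle_dec x b then
                       RInt (fun y => g (x,y)) c d else 0 else 0).
  assert (Hin : forall x, a' <= x <= b' ->
    ex_RInt (fun y => g (x,y)) c' d' /\ RInt (fun y => g (x,y)) c' d' = F x).
  { intros x Hx. unfold F.
    destruct (Rle_dec a x); [destruct (Rle_dec x b)|].
    - apply RInt_widen; try lra; [intros y Hy; apply Hs; lra.. | apply Hi; lra].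
    - apply RInt_eq0. intros y _. apply Hs. lra.
    - apply RInt_eq0. intros y _. apply Hs. lra. }
  assert (EF : forall x, Rmin a' b' < x < Rmax a' b' -> F x = RInt (fun y => g (x,y)) c' d').
  { intros x Hx. rewrite Rmin_left, Rmax_right in Hx by lra. symmetry; apply Hin; lra. }
  assert (EF2 : forall x, Rmin a b < x < Rmax a b -> RInt (fun y => g (x,y)) c d = F x).
  { intros x Hx. rewrite Rmin_left, Rmax_right in Hx by lra.
    unfold F. destruct (Rle_dec a x); [|lra]. destruct (Rle_dec x b); [reflexivity|lra]. }
  destruct (RInt_widen F a b a' b') as [HF1 HF2]; try lra.
  { intros x Hx; unfold F; destruct (Rle_dec a x); [lra|reflexivity]. }
  { intros x Hx; unfold F; destruct (Rle_dec a x); [|reflexivity].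
    destruct (Rle_dec x b); [lra|reflexivity]. }
  { apply ex_RInt_ext with (1 := EF2). exact Ho. }
  do 2 (split; [lra|]). split; [intros x y Hn; apply Hs; lra|].
  split; [intros x Hx; apply (Hin x Hx)|]. split.
  - apply ex_RInt_ext with (1 := EF). exact HF1.
  - rewrite <- (RInt_ext _ _ _ _ EF), HF2, <- (RInt_ext _ _ _ _ EF2). exact HI.
Qed.

Lemma box_int_unique a b c d a' b' c' d' g I1 I2 :
  box_int a b c d g I1 -> box_int a' b' c' d' g I2 -> I1 = I2.
Proof.
  intros H1 H2.
  assert (W1 := box_int_widen _ _ _ _ (Rmin a a') (Rmax b b') (Rmin c c') (Rmax d d') _ _
                  (Rmin_l _ _) (Rmax_l _ _) (Rmin_l _ _) (Rmax_l _ _) H1).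
  assert (W2 := box_int_widen _ _ _ _ (Rmin a a') (Rmax b b') (Rmin c c') (Rmax d d') _ _
                  (Rmin_r _ _) (Rmax_r _ _) (Rmin_r _ _) (Rmax_r _ _) H2).
  destruct W1 as (_&_&_&_&_&<-). destruct W2 as (_&_&_&_&_&<-). reflexivity.
Qed.

Lemma integral2_box_int a b c d g I : box_int a b c d g I -> integral2 g = I.
Proof.
  intros H. unfold integral2.
  assert (Ex : exists I, Int2 g I) by (exists I; eapply box_int_Int2; eauto).
  destruct (Int2_box_int _ _ (epsilon_spec (inhabits 0) (fun I => Int2 g I) Ex))
    as (a' & b' & c' & d' & H').
  eapply box_int_unique; eauto.
Qed.

Lemma box_int_ext a b c d g1 g2 I : (forall q, g1 q = g2 q) ->
  box_int a b c d g1 I -> box_int a b c d g2 I.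
Proof. intros E H. replace g2 with g1; auto. apply functional_extensionality; auto. Qed.

Lemma box_int_0 a b c d : a <= b -> c <= d -> box_int a b c d (fun _ => 0) 0.
Proof.
  intros Hab Hcd. do 3 (split; [auto|]).
  split; [intros; apply ex_RInt_const|].
  assert (E : RInt (fun _ : R => 0) c d = 0) by (rewrite RInt_cst; apply Rmult_0_l).
  rewrite E. split; [apply ex_RInt_const|]. rewrite RInt_cst. apply Rmult_0_l.
Qed.

Lemma box_int_lin a b c d g1 g2 I1 I2 l : box_int a b c d g1 I1 -> box_int a b c d g2 I2 ->
  box_int a b c d (fun q => g1 q + l * g2 q) (I1 + l * I2).
Proof.
  intros (Hab & Hcd & Hs1 & Hi1 & Ho1 & HI1) (_ & _ & Hs2 & Hi2 & Ho2 & HI2).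
  assert (Hin : forall x, a <= x <= b ->
    ex_RInt (fun y => g1 (x,y) + l * g2 (x,y)) c d /\
    RInt (fun y => g1 (x,y) + l * g2 (x,y)) c d =
    RInt (fun y => g1 (x,y)) c d + l * RInt (fun y => g2 (x,y)) c d).
  { intros x Hx. assert (X2 := ex_RInt_scal (fun y => g2 (x,y)) c d l (Hi2 x Hx)). split.
    - apply (ex_RInt_plus (fun y => g1 (x,y)) (fun y => l * g2 (x,y))); auto.
    - rewrite (RInt_plus (fun y => g1 (x,y)) (fun y => l * g2 (x,y))),
        (RInt_scal (fun y => g2 (x,y))); auto. }
  assert (E : forall x, Rmin a b < x < Rmax a b ->
    RInt (fun y => g1 (x,y)) c d + l * RInt (fun y => g2 (x,y)) c d =
    RInt (fun y => g1 (x,y) + l * g2 (x,y)) c d).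
  { intros x Hx. rewrite Rmin_left, Rmax_right in Hx by lra. symmetry; apply Hin; lra. }
  assert (X2 : ex_RInt (fun x => l * RInt (fun y => g2 (x,y)) c d) a b)
    by exact (ex_RInt_scal _ a b l Ho2).
  do 2 (split; [assumption|]). split; [intros x y Hn; rewrite Hs1, Hs2 by exact Hn; ring|].
  split; [intros x Hx; apply (Hin x Hx)|]. split.
  - apply ex_RInt_ext with (1 := E). exact (ex_RInt_plus _ _ _ _ Ho1 X2).
  - rewrite <- (RInt_ext _ _ _ _ E), (RInt_plus (fun x => RInt (fun y => g1 (x,y)) c d)
      (fun x => l * RInt (fun y => g2 (x,y)) c d)); [| exact Ho1 | exact X2].
    rewrite (RInt_scal (fun x => RInt (fun y => g2 (x,y)) c d)) by exact Ho2.
    rewrite HI1, HI2. reflexivity.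
Qed.

Lemma box_int_le a b c d g1 g2 I1 I2 : box_int a b c d g1 I1 -> box_int a b c d g2 I2 ->
  (forall q, g1 q <= g2 q) -> I1 <= I2.
Proof.
  intros (Hab & Hcd & Hs1 & Hi1 & Ho1 & HI1) (_ & _ & Hs2 & Hi2 & Ho2 & HI2) Hle.
  rewrite <- HI1, <- HI2. apply RInt_le; auto.
  intros x Hx. apply RInt_le; auto; [apply Hi1 | apply Hi2]; lra.
Qed.

Lemma box_int_le_outer a b c d g I (B : R -> R) : box_int a b c d g I ->
  (forall x, a <= x <= b -> RInt (fun y => g (x,y)) c d <= B x) -> ex_RInt B a b ->
  I <= RInt B a b.
Proof.
  intros (Hab & Hcd & Hs & Hi & Ho & HI) HB HBe. rewrite <- HI.
  apply RInt_le; auto. intros x Hx. apply HB; lra.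
Qed.

Lemma box_int_scal a b c d g I l :
  box_int a b c d g I -> box_int a b c d (fun q => l * g q) (l * I).
Proof.
  intros HI. assert (H0 : a <= b /\ c <= d) by (destruct HI as (? & ? & _); auto).
  replace (l * I) with (0 + l * I) by ring.
  apply box_int_ext with (fun q => 0 + l * g q); [intros; ring|].
  apply box_int_lin; auto. apply box_int_0; tauto.
Qed.

Definition ind_itv (s t x : R) : R := if Rle_dec s x then if Rle_dec x t then 1 else 0 else 0.

Ltac case_Rle := repeat match goal with
  | |- context [Rle_dec ?x ?y] => destruct (Rle_dec x y)
  | H : context [Rle_dec ?x ?y] |- _ => destruct (Rle_dec x y)
  end.

Lemma RInt_ind_itv a b s t : a <= b -> s <= t ->
  ex_RInt (ind_itv s t) a b /\ 0 <= RInt (ind_itv s t) a b <= t - s.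
Proof.
  intros Hab Hst.
  set (u := Rmax a (Rmin s b)). set (v := Rmax u (Rmin t b)).
  assert (Hu : a <= u) by apply Rmax_l. assert (Huv : u <= v) by apply Rmax_l.
  assert (Hv : v <= b) by (unfold v, u, Rmax, Rmin; case_Rle; lra).
  destruct (RInt_eq0 (ind_itv s t) a u) as [X1 V1].
  { intros x Hx. rewrite Rmin_left, Rmax_right in Hx by lra.
    unfold u, ind_itv, Rmax, Rmin in *; case_Rle; lra. }
  destruct (RInt_eq0 (ind_itv s t) v b) as [X3 V3].
  { intros x Hx. rewrite Rmin_left, Rmax_right in Hx by lra.
    unfold v, u, ind_itv, Rmax, Rmin in *; case_Rle; lra. }
  assert (E2 : forall x, Rmin u v < x < Rmax u v -> 1 = ind_itv s t x).
  { intros x Hx. rewrite Rmin_left, Rmax_right in Hx by lra.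
    unfold v, u, ind_itv, Rmax, Rmin in *; case_Rle; lra. }
  assert (X2 : ex_RInt (ind_itv s t) u v)
    by (apply ex_RInt_ext with (1 := E2); apply ex_RInt_const).
  assert (X12 : ex_RInt (ind_itv s t) a v) by (apply ex_RInt_Chasles with u; auto).
  split; [apply ex_RInt_Chasles with v; auto|].
  rewrite <- (RInt_Chasles _ a v b), <- (RInt_Chasles _ a u v) by auto.
  rewrite V1, V3, <- (RInt_ext _ _ u v E2), RInt_cst. unfold plus; simpl.
  assert (v - u <= t - s) by (unfold v, u, Rmax, Rmin; case_Rle; lra).
  lra.
Qed.

Lemma RInt_truncate (G : R -> R) a b s t : a <= s -> s <= t -> t <= b -> ex_RInt G s t ->
  ex_RInt (fun x => if Rle_dec s x then if Rle_dec x t then G x else 0 else 0) a b /\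
  RInt (fun x => if Rle_dec s x then if Rle_dec x t then G x else 0 else 0) a b = RInt G s t.
Proof.
  intros H1 H2 H3 HG.
  set (F := fun x => if Rle_dec s x then if Rle_dec x t then G x else 0 else 0).
  destruct (RInt_eq0 F a s) as [X1 V1].
  { intros x Hx. rewrite Rmin_left, Rmax_right in Hx by lra. unfold F; case_Rle; lra. }
  destruct (RInt_eq0 F t b) as [X3 V3].
  { intros x Hx. rewrite Rmin_left, Rmax_right in Hx by lra. unfold F; case_Rle; lra. }
  assert (E2 : forall x, Rmin s t < x < Rmax s t -> G x = F x).
  { intros x Hx. rewrite Rmin_left, Rmax_right in Hx by lra. unfold F; case_Rle; lra. }
  assert (X2 : ex_RInt F s t) by (apply ex_RInt_ext with G; auto).
  assert (X12 : ex_RInt F a t) by (apply ex_RInt_Chasles with s; auto).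
  split; [apply ex_RInt_Chasles with t; auto|].
  rewrite <- (RInt_Chasles _ a t b), <- (RInt_Chasles _ a s t) by auto.
  change (plus (plus (RInt F a s) (RInt F s t)) (RInt F t b) = RInt G s t).
  rewrite V1, V3, <- (RInt_ext _ _ s t E2). unfold plus; simpl. ring.
Qed.

Definition step_zero (a b : R) : StepFun a b := mkStepFun (StepFun_P4 a b 0).

(* A step function is its own Riemann approximation, with zero error bound. *)
Definition step_integrable a b (phi : StepFun a b) : Riemann_integrable phi a b.
Proof.
  intros eps. exists phi, (step_zero a b). split.
  - intros t _. unfold step_zero; simpl; unfold fct_cte. rewrite Rminus_diag, Rabs_R0. lra.
  - unfold step_zero. rewrite StepFun_P18, Rmult_0_l, Rabs_R0. apply cond_pos.
Defined.

Lemma RInt_step a b (phi : StepFun a b) : a <= b ->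
  ex_RInt phi a b /\ RInt phi a b = RiemannInt_SF phi.
Proof.
  intros Hab. split; [apply ex_RInt_Reals_1; exact (step_integrable a b phi)|].
  rewrite (RInt_Reals _ _ _ (step_integrable a b phi)).
  unfold RiemannInt.
  destruct (RiemannInt_exists (step_integrable a b phi) RinvN RinvN_cv) as [l Hl].
  simpl in Hl. apply UL_sequence with (1 := Hl).
  intros e He. exists 0%nat. intros. unfold R_dist. rewrite Rminus_diag, Rabs_R0. exact He.
Qed.

Lemma RiemannInt_SF_nonneg a b (psi : StepFun a b) : a <= b ->
  (forall x, a < x < b -> 0 <= psi x) -> 0 <= RiemannInt_SF psi.
Proof.
  intros Hab H. replace 0 with (RiemannInt_SF (step_zero a b)).
  - apply StepFun_P37; auto. intros; unfold step_zero; simpl; unfold fct_cte; auto.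
  - unfold step_zero. apply (eq_trans (StepFun_P18 a b 0)). ring.
Qed.

Lemma ex_RInt_approx (f : R -> R) a b : a <= b ->
  (forall eps, 0 < eps -> exists g k : R -> R, ex_RInt g a b /\ ex_RInt k a b /\
     (forall t, a <= t <= b -> Rabs (f t - g t) <= k t) /\ RInt k a b < eps) ->
  ex_RInt f a b.
Proof.
  intros Hab Happ. apply ex_RInt_Reals_1. intro eps.
  assert (He4 : 0 < eps / 4) by (generalize (cond_pos eps); lra).
  destruct (constructive_indefinite_description _ (Happ (eps/4) He4)) as [g Hg].
  destruct (constructive_indefinite_description _ Hg) as [k (Hg1 & Hk1 & Hfk & Hk)].
  destruct (ex_RInt_Reals_0 _ _ _ Hg1 (mkposreal _ He4)) as [phig [psig [Hg2 Hg3]]].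
  destruct (ex_RInt_Reals_0 _ _ _ Hk1 (mkposreal _ He4)) as [phik [psik [Hk2 Hk3]]].
  rewrite Rmin_left, Rmax_right in Hg2, Hk2 by lra. simpl in Hg3, Hk3.
  (* f - phig is bounded by |f - g| + |g - phig| <= k + psig <= phik + psik + psig *)
  exists phig, (mkStepFun (StepFun_P28 1 phik (mkStepFun (StepFun_P28 1 psik psig)))). split.
  - intros t Ht. rewrite Rmin_left, Rmax_right in Ht by lra. simpl.
    specialize (Hfk t Ht). specialize (Hg2 t Ht). specialize (Hk2 t Ht).
    apply Rabs_le_between in Hk2.
    assert (Rabs (f t - phig t) <= Rabs (f t - g t) + Rabs (g t - phig t)).
    { replace (f t - phig t) with ((f t - g t) + (g t - phig t)) by ring. apply Rabs_triang. }
    lra.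
  - rewrite StepFun_P30. simpl. rewrite StepFun_P30.
    destruct (RInt_step a b phik Hab) as [X1 V1].
    destruct (RInt_step a b psik Hab) as [X2 V2].
    assert (Hle : RInt phik a b <= RInt (fun x => k x + psik x) a b).
    { apply RInt_le; auto. apply (ex_RInt_plus k psik); auto.
      intros x Hx. specialize (Hk2 x ltac:(lra)). apply Rabs_le_between in Hk2. lra. }
    rewrite (RInt_plus k psik) in Hle by auto. unfold plus in Hle; simpl in Hle.
    rewrite V1, V2 in Hle.
    apply Rabs_def2 in Hg3. apply Rabs_def2 in Hk3.
    assert (0 <= RiemannInt_SF phik + 1 * (RiemannInt_SF psik + 1 * RiemannInt_SF psig)).
    { rewrite <- StepFun_P30 with (f := psik) (g := psig), <- StepFun_P30.
      apply RiemannInt_SF_nonneg; auto. intros x Hx. simpl.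
      specialize (Hfk x ltac:(lra)). specialize (Hg2 x ltac:(lra)). specialize (Hk2 x ltac:(lra)).
      apply Rabs_le_between in Hk2.
      generalize (Rabs_pos (g x - phig x)) (Rabs_pos (f x - g x)). lra. }
    apply Rabs_def1; lra.
Qed.

(* The two end pieces contribute at most [2 B eta]. *)
Lemma ex_RInt_inner (F : R -> R) a b al be B : a <= al -> al <= be -> be <= b ->
  (forall x, Rabs (F x) <= B) -> (forall x, ~ (al <= x <= be) -> F x = 0) ->
  (forall eta, 0 < eta -> al + eta <= be - eta -> ex_RInt F (al + eta) (be - eta)) ->
  ex_RInt F a b.
Proof.
  intros Ha Hab Hb HB HF0 Hmid.
  assert (B0 : 0 <= B) by (eapply Rle_trans; [apply Rabs_pos | apply (HB a)]).
  apply ex_RInt_approx; [lra|]. intros eps Heps.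
  set (eta := eps / (4 * (B + 1))).
  assert (Heta : 0 < eta) by (unfold eta; apply Rdiv_lt_0_compat; lra).
  assert (Heta2 : 2 * (B * eta) < eps).
  { unfold eta. apply Rmult_lt_reg_r with (4 * (B + 1)); [lra|].
    unfold Rdiv. field_simplify; [|lra]. nra. }
  set (k := fun x => B * ind_itv al (al + eta) x + B * ind_itv (be - eta) be x).
  destruct (RInt_ind_itv a b al (al + eta)) as [I1 J1]; try lra.
  destruct (RInt_ind_itv a b (be - eta) be) as [I2 J2]; try lra.
  assert (S1 := ex_RInt_scal _ a b B I1). assert (S2 := ex_RInt_scal _ a b B I2).
  assert (Kex : ex_RInt k a b) by exact (ex_RInt_plus _ _ _ _ S1 S2).
  assert (Kint : RInt k a b < eps).
  { unfold k. rewrite (RInt_plus (fun x => B * ind_itv al (al + eta) x)); [| exact S1 | exact S2].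
    rewrite (RInt_scal (ind_itv al (al + eta))), (RInt_scal (ind_itv (be - eta) be)) by assumption.
    unfold plus, scal; simpl; unfold mult; simpl.
    assert (B * RInt (ind_itv al (al + eta)) a b <= B * eta) by (apply Rmult_le_compat_l; lra).
    assert (B * RInt (ind_itv (be - eta) be) a b <= B * eta) by (apply Rmult_le_compat_l; lra).
    lra. }
  assert (Kend : forall t, 0 <= k t /\ ((al <= t <= al + eta \/ be - eta <= t <= be) -> B <= k t)).
  { intros t. unfold k, ind_itv. case_Rle; split; intros; nra. }
  assert (Hend : forall t, ~ (al + eta <= t <= be - eta) -> Rabs (F t) <= k t).
  { intros t Ht. destruct (classic (al <= t <= be)).
    - apply (Rle_trans _ B); [apply HB | apply Kend; lra].
    - rewrite HF0, Rabs_R0 by assumption. apply Kend. }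
  destruct (Rle_dec (al + eta) (be - eta)) as [Hle|Hgt].
  - exists (fun x => if Rle_dec (al + eta) x then if Rle_dec x (be - eta) then F x else 0 else 0),
      k.
    split; [apply (RInt_truncate F a b (al + eta) (be - eta)); auto; lra|].
    split; [exact Kex|]. split; [|exact Kint]. intros t _.
    destruct (Rle_dec (al + eta) t); [destruct (Rle_dec t (be - eta))|].
    + rewrite Rminus_diag, Rabs_R0. apply Kend.
    + rewrite Rminus_0_r. apply Hend. lra.
    + rewrite Rminus_0_r. apply Hend. lra.
  - exists (fun _ => 0), k.
    split; [apply ex_RInt_const|]. split; [exact Kex|]. split; [|exact Kint].
    intros t _. rewrite Rminus_0_r. apply Hend. lra.
Qed.

Lemma abs_RInt_le_const_abs (g : R -> R) s t M : ex_RInt g s t ->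
  (forall x, Rmin s t <= x <= Rmax s t -> Rabs (g x) <= M) ->
  Rabs (RInt g s t) <= M * Rabs (t - s).
Proof.
  intros He Hb. destruct (Rle_dec s t) as [Hst|Hst].
  - rewrite Rmin_left, Rmax_right in Hb by lra. rewrite (Rabs_right (t - s)) by lra.
    rewrite Rmult_comm. apply abs_RInt_le_const; auto.
  - rewrite Rmin_right, Rmax_left in Hb by lra. rewrite (Rabs_left (t - s)) by lra.
    rewrite <- (opp_RInt_swap g t s) by (apply ex_RInt_swap; auto). unfold opp; simpl.
    rewrite Rabs_Ropp. replace (- (t - s)) with (s - t) by ring. rewrite Rmult_comm.
    apply abs_RInt_le_const; [lra | apply ex_RInt_swap; auto | auto].
Qed.

(* Arbitrary when [E] has no least upper bound. *)
Definition sup (E : R -> Prop) : R := epsilon (inhabits 0) (is_lub E).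

Lemma sup_spec E B : (exists y, E y) -> (forall y, E y -> y <= B) -> is_lub E (sup E).
Proof.
  intros Hne Hb. unfold sup. apply epsilon_spec.
  destruct (completeness E) as [m Hm]; [exists B; exact Hb | exact Hne | exists m; exact Hm].
Qed.

Lemma lub_approx E m eps : is_lub E m -> 0 < eps -> exists y, E y /\ m - eps < y.
Proof.
  intros [Hu Hl] He. apply NNPP. intro Hn.
  assert (is_upper_bound E (m - eps)).
  { intros y Hy. apply Rnot_lt_le. intro Hc. apply Hn. exists y; auto. }
  specialize (Hl _ H). lra.
Qed.

Lemma concave_lipschitz (u : R -> R) x1 x2 m M eta : 0 < eta ->
  (forall x y l, x1 <= x <= x2 -> x1 <= y <= x2 -> 0 <= l <= 1 ->
     l * u x + (1-l) * u y <= u (l*x + (1-l)*y)) ->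
  (forall x, x1 <= x <= x2 -> m <= u x <= M) ->
  forall x y, x1 + eta <= x <= x2 - eta -> x1 + eta <= y <= x2 - eta ->
  Rabs (u x - u y) <= (M - m) / eta * Rabs (x - y).
Proof.
  intros Heta Hc Hb.
  assert (Key : forall x y, x1 + eta <= x <= x2 - eta -> x1 + eta <= y <= x2 - eta -> x < y ->
     Rabs (u x - u y) <= (M - m) / eta * Rabs (x - y)).
  { intros x y Hx Hy Hxy.
    pose proof (Hb x ltac:(lra)). pose proof (Hb x2 ltac:(lra)).
    pose proof (Hb y ltac:(lra)). pose proof (Hb x1 ltac:(lra)).
    (* y lies between x and x2, x lies between x1 and y *)
    set (l := (x2 - y) / (x2 - x)).
    assert (Hl : 0 <= 1 - l <= (y - x) / eta).
    { replace (1 - l) with ((y - x) / (x2 - x)) by (unfold l; field; lra). split.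
      - apply Rdiv_le_0_compat; lra.
      - unfold Rdiv. apply Rmult_le_compat_l; [lra|]. apply Rinv_le_contravar; lra. }
    assert (Hl0 : 0 <= l) by (apply Rdiv_le_0_compat; lra).
    assert (C1 := Hc x x2 l ltac:(lra) ltac:(lra) ltac:(lra)).
    replace (l * x + (1 - l) * x2) with y in C1 by (unfold l; field; lra).
    set (mu := (y - x) / (y - x1)).
    assert (Hmu : 0 <= mu <= (y - x) / eta).
    { unfold mu. split; [apply Rdiv_le_0_compat; lra|].
      unfold Rdiv. apply Rmult_le_compat_l; [lra|]. apply Rinv_le_contravar; lra. }
    assert (Hmu1 : mu <= 1).
    { unfold mu. apply Rmult_le_reg_r with (y - x1); [lra|].
      unfold Rdiv. rewrite Rmult_assoc, Rinv_l by lra. lra. }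
    assert (C2 := Hc x1 y mu ltac:(lra) ltac:(lra) ltac:(lra)).
    replace (mu * x1 + (1 - mu) * y) with x in C2 by (unfold mu; field; lra).
    assert (u x - u y <= (y - x) / eta * (M - m)) by nra.
    assert (u y - u x <= (y - x) / eta * (M - m)) by nra.
    rewrite (Rabs_left (x - y)) by lra.
    replace ((M - m) / eta * - (x - y)) with ((y - x) / eta * (M - m)) by (field; lra).
    apply Rabs_le. lra. }
  intros x y Hx Hy. destruct (Rtotal_order x y) as [Hlt|[Heq|Hgt]].
  - apply Key; auto.
  - subst. rewrite !Rminus_diag, Rabs_R0. lra.
  - rewrite Rabs_minus_sym, (Rabs_minus_sym x). apply Key; auto.
Qed.

Definition jcont (h : pt -> R) := forall x y, continuity_2d_pt (fun u v => h (u,v)) x y.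

Lemma continuous_of_eps (g : R -> R) z : (forall eps, 0 < eps -> exists del, 0 < del /\
   forall x, Rabs (x - z) < del -> Rabs (g x - g z) < eps) -> continuous g z.
Proof.
  intros H. apply continuity_pt_filterlim. intros eps He.
  destruct (H eps He) as [del [Hd Hx]]. exists del. split; auto.
  intros x [_ Hx']. apply Hx. exact Hx'.
Qed.

Lemma ex_RInt_section h x s t : jcont h -> ex_RInt (fun y => h (x,y)) s t.
Proof.
  intros hc. apply (@ex_RInt_continuous R_CompleteNormedModule). intros z _.
  apply continuous_of_eps. intros eps He.
  destruct (hc x z (mkposreal _ He)) as [del Hd]. exists del. split; [apply cond_pos|].
  intros v Hv. apply Hd; [rewrite Rminus_diag, Rabs_R0; apply cond_pos | exact Hv].
Qed.

Lemma jcont_bounded h a b c d : jcont h ->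
  exists M, 0 <= M /\ forall x y, a <= x <= b -> c <= y <= d -> Rabs (h (x,y)) <= M.
Proof.
  intros hc.
  destruct (Rle_dec a b) as [Hab|Hab]; [|exists 0; split; [lra|]; intros; lra].
  destruct (Rle_dec c d) as [Hcd|Hcd]; [|exists 0; split; [lra|]; intros; lra].
  destruct (uniform_continuity_2d (fun u v => h (u,v)) a b c d (fun x y _ _ => hc x y)
    (mkposreal 1 Rlt_0_1)) as [del Hd].
  simpl in Hd. set (dl := pos del). assert (Hdl : 0 < dl) by apply cond_pos.
  (* walk from (a, c) to (x, y) in N steps of size dl / 2, gaining at most 1 per step *)
  assert (Walk : forall N : nat, forall x y, a <= x <= b -> c <= y <= d ->
     x <= a + INR N * (dl / 2) -> y <= c + INR N * (dl / 2) ->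
     Rabs (h (x,y)) <= Rabs (h (a,c)) + INR N).
  { induction N as [|N IH]; intros x y Hx Hy Hx2 Hy2.
    - simpl in *. replace x with a by lra. replace y with c by lra. lra.
    - rewrite S_INR, Rmult_plus_distr_r in *. pose proof (pos_INR N).
      assert (0 <= INR N * (dl / 2)) by (apply Rmult_le_pos; lra).
      set (x' := Rmax a (x - dl / 2)). set (y' := Rmax c (y - dl / 2)).
      assert (Hx' : a <= x' <= b /\ x' <= a + INR N * (dl / 2) /\ Rabs (x - x') < dl).
      { unfold x', Rmax; destruct (Rle_dec a (x - dl / 2)); repeat split;
          try apply Rabs_def1; lra. }
      assert (Hy' : c <= y' <= d /\ y' <= c + INR N * (dl / 2) /\ Rabs (y - y') < dl).
      { unfold y', Rmax; destruct (Rle_dec c (y - dl / 2)); repeat split;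
          try apply Rabs_def1; lra. }
      destruct Hx' as (A1 & A2 & A3). destruct Hy' as (B1 & B2 & B3).
      specialize (IH x' y' A1 B1 A2 B2). specialize (Hd x' y' x y A1 B1 Hx Hy A3 B3).
      assert (Rabs (h (x,y)) <= Rabs (h (x',y')) + Rabs (h (x,y) - h (x',y'))).
      { replace (h (x,y)) with (h (x',y') + (h (x,y) - h (x',y'))) at 1 by ring.
        apply Rabs_triang. }
      lra. }
  destruct (INR_unbounded ((b - a + (d - c)) / (dl / 2))) as [N HN].
  assert (HN' : b - a + (d - c) <= INR N * (dl / 2)).
  { apply Rmult_le_reg_r with (/ (dl / 2)); [apply Rinv_0_lt_compat; lra|].
    rewrite Rmult_assoc, Rinv_r by lra. unfold Rdiv in HN. lra. }
  exists (Rabs (h (a,c)) + INR N). split; [generalize (Rabs_pos (h (a,c))) (pos_INR N); lra|].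
  intros x y Hx Hy. apply Walk; auto; lra.
Qed.

Lemma jcont_const c : jcont (fun _ => c).
Proof. intros x y. apply continuity_2d_pt_const. Qed.

Lemma jcont_fst : jcont fst.
Proof. intros x y. apply continuity_2d_pt_id1. Qed.

Lemma jcont_snd : jcont snd.
Proof. intros x y. apply continuity_2d_pt_id2. Qed.

Lemma jcont_plus g1 g2 : jcont g1 -> jcont g2 -> jcont (fun q => g1 q + g2 q).
Proof. intros H1 H2 x y. apply (continuity_2d_pt_plus (fun u v => g1 (u,v))); auto. Qed.

Lemma jcont_minus g1 g2 : jcont g1 -> jcont g2 -> jcont (fun q => g1 q - g2 q).
Proof. intros H1 H2 x y. apply (continuity_2d_pt_minus (fun u v => g1 (u,v))); auto. Qed.

Lemma jcont_mult g1 g2 : jcont g1 -> jcont g2 -> jcont (fun q => g1 q * g2 q).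
Proof. intros H1 H2 x y. apply (continuity_2d_pt_mult (fun u v => g1 (u,v))); auto. Qed.

Lemma jcont_ext g1 g2 : (forall q, g1 q = g2 q) -> jcont g1 -> jcont g2.
Proof. intros E H. replace g2 with g1; auto. apply functional_extensionality; auto. Qed.

Lemma jcont_min g1 g2 : jcont g1 -> jcont g2 -> jcont (fun q => Rmin (g1 q) (g2 q)).
Proof.
  intros H1 H2 x y eps. destruct (H1 x y eps) as [d1 Hd1]. destruct (H2 x y eps) as [d2 Hd2].
  exists (mkposreal _ (Rmin_pos _ _ (cond_pos d1) (cond_pos d2))). simpl. intros u v Hu Hv.
  assert (A1 := Hd1 u v (Rlt_le_trans _ _ _ Hu (Rmin_l _ _)) (Rlt_le_trans _ _ _ Hv (Rmin_l _ _))).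
  assert (A2 := Hd2 u v (Rlt_le_trans _ _ _ Hu (Rmin_r _ _)) (Rlt_le_trans _ _ _ Hv (Rmin_r _ _))).
  apply Rabs_def2 in A1. apply Rabs_def2 in A2.
  unfold Rmin; destruct (Rle_dec (g1 (u,v)) (g2 (u,v))); destruct (Rle_dec (g1 (x,y)) (g2 (x,y)));
    apply Rabs_def1; lra.
Qed.

Lemma continuous2_jcont g : continuous2 g -> jcont g.
Proof.
  intros Hg x y eps. destruct (Hg (x,y) eps (cond_pos eps)) as [del [Hd H]].
  exists (mkposreal (del / 2) ltac:(lra)). simpl. intros u v Hu Hv. apply (H (u,v)).
  unfold vnorm, vsub; simpl. apply Rabs_def2 in Hu. apply Rabs_def2 in Hv.
  rewrite <- (sqrt_pow2 del) by lra. apply sqrt_lt_1_alt.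
  split; [apply Rplus_le_le_0_compat; apply pow2_ge_0 | nra].
Qed.

(** * Convex sets: sections and shadow *)

Definition convex (S : pt -> Prop) : Prop := forall x1 y1 x2 y2 l,
  S (x1,y1) -> S (x2,y2) -> 0 <= l <= 1 -> S (l*x1 + (1-l)*x2, l*y1 + (1-l)*y2).

Definition reflect_y (S : pt -> Prop) : pt -> Prop := fun q => S (fst q, - snd q).
Definition sec_sup (S : pt -> Prop) (x : R) : R := sup (fun y => S (x,y)).
Definition sec_inf (S : pt -> Prop) (x : R) : R := - sec_sup (reflect_y S) x.
Definition shadow (S : pt -> Prop) (x : R) : Prop := exists y, S (x,y).
Definition shadow_sup (S : pt -> Prop) : R := sup (shadow S).
Definition shadow_inf (S : pt -> Prop) : R := - sup (fun x => shadow S (- x)).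

Lemma between_weight s v t : s <= v <= t -> s < t ->
  0 <= (t - v) / (t - s) <= 1 /\ (t - v) / (t - s) * s + (1 - (t - v) / (t - s)) * t = v.
Proof.
  intros Hv Hst. split; [split|].
  - apply Rdiv_le_0_compat; lra.
  - apply Rmult_le_reg_r with (t - s); [lra|]. unfold Rdiv.
    rewrite Rmult_assoc, Rinv_l by lra. lra.
  - field. lra.
Qed.

Lemma convex_reflect_y S : convex S -> convex (reflect_y S).
Proof.
  intros Hc x1 y1 x2 y2 l H1 H2 Hl. unfold reflect_y in *; simpl in *.
  replace (- (l * y1 + (1 - l) * y2)) with (l * - y1 + (1 - l) * - y2) by ring. auto.
Qed.

Lemma shadow_reflect_y S x : shadow (reflect_y S) x <-> shadow S x.
Proof.
  unfold shadow, reflect_y; simpl. split; intros [y Hy]; exists (-y); auto.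
  rewrite Ropp_involutive; auto.
Qed.

Lemma shadow_between S x1 x2 x : convex S -> shadow S x1 -> shadow S x2 -> x1 <= x <= x2 ->
  shadow S x.
Proof.
  intros Hc [y1 H1] [y2 H2] Hx. destruct (Req_dec x1 x2) as [E|N].
  - replace x with x1 by lra. exists y1; auto.
  - destruct (between_weight x1 x x2) as [Hl E]; [lra|lra|].
    set (l := (x2 - x) / (x2 - x1)) in *.
    exists (l * y1 + (1 - l) * y2). rewrite <- E. apply Hc; auto.
Qed.

Lemma section_facts S x c d : convex S -> shadow S x -> (forall y, S (x,y) -> c <= y <= d) ->
  c <= sec_inf S x <= sec_sup S x /\ sec_sup S x <= d /\
  (forall y, S (x,y) -> sec_inf S x <= y <= sec_sup S x) /\
  (forall y, sec_inf S x < y < sec_sup S x -> S (x,y)).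
Proof.
  intros Hc [y0 Hy0] Hb.
  assert (Hu : is_lub (fun y => S (x,y)) (sec_sup S x)).
  { apply sup_spec with d; [exists y0; auto | intros y Hy; apply Hb; auto]. }
  assert (Hu' : is_lub (fun y => reflect_y S (x,y)) (sec_sup (reflect_y S) x)).
  { apply sup_spec with (-c).
    - exists (-y0). unfold reflect_y; simpl. rewrite Ropp_involutive. auto.
    - intros y Hy. unfold reflect_y in Hy; simpl in Hy. specialize (Hb _ Hy). lra. }
  unfold sec_inf.
  assert (A1 : sec_sup S x <= d) by (apply Hu; intros y Hy; apply Hb; auto).
  assert (A2 : sec_sup (reflect_y S) x <= - c).
  { apply Hu'. intros y Hy. unfold reflect_y in Hy; simpl in Hy. specialize (Hb _ Hy). lra. }
  assert (A3 : forall y, S (x,y) -> - sec_sup (reflect_y S) x <= y <= sec_sup S x).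
  { intros y Hy. split; [|apply Hu; auto].
    assert (- y <= sec_sup (reflect_y S) x); [|lra].
    apply Hu'. unfold reflect_y; simpl. rewrite Ropp_involutive; auto. }
  specialize (A3 y0 Hy0) as A0.
  repeat split; try lra; [apply A3; auto .. |].
  intros y Hy.
  destruct (lub_approx _ _ (sec_sup S x - y) Hu ltac:(lra)) as [y1 [Hy1 Hy1']].
  destruct (lub_approx _ _ (sec_sup (reflect_y S) x + y) Hu' ltac:(lra)) as [y2 [Hy2 Hy2']].
  unfold reflect_y in Hy2; simpl in Hy2.
  destruct (between_weight (- y2) y y1) as [Hl E]; [lra|lra|].
  rewrite <- E. replace x with (((y1 - y) / (y1 - - y2)) * x + (1 - (y1 - y) / (y1 - - y2)) * x)
    at 1 by ring. apply Hc; auto.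
Qed.

Lemma sec_sup_concave S c d : convex S -> (forall x y, S (x,y) -> c <= y <= d) ->
  forall x x' l, shadow S x -> shadow S x' -> 0 <= l <= 1 ->
  l * sec_sup S x + (1 - l) * sec_sup S x' <= sec_sup S (l*x + (1-l)*x').
Proof.
  intros Hc Hb x x' l [y0 Hy0] [y0' Hy0'] Hl.
  set (z := l*x + (1-l)*x').
  assert (Hz : S (z, l*y0 + (1-l)*y0')) by (apply Hc; auto).
  assert (Hlub : forall x y, S (x,y) -> is_lub (fun y => S (x,y)) (sec_sup S x)).
  { intros u v Huv. apply sup_spec with d; [exists v; auto | intros w Hw; apply (Hb _ _ Hw)]. }
  apply Rnot_lt_le. intro Hlt.
  set (g := l * sec_sup S x + (1 - l) * sec_sup S x' - sec_sup S z).
  destruct (lub_approx _ _ g (Hlub _ _ Hy0) ltac:(unfold g; lra)) as [y1 [Hy1 Hy1']].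
  destruct (lub_approx _ _ g (Hlub _ _ Hy0') ltac:(unfold g; lra)) as [y2 [Hy2 Hy2']].
  assert (l*y1 + (1-l)*y2 <= sec_sup S z) by (apply (Hlub _ _ Hz); apply Hc; auto).
  assert (l * (sec_sup S x - g) <= l * y1) by (apply Rmult_le_compat_l; lra).
  assert ((1-l) * (sec_sup S x' - g) <= (1-l) * y2) by (apply Rmult_le_compat_l; lra).
  destruct (Req_dec l 0) as [Hl0|Hl0].
  - subst l. unfold g in *. lra.
  - assert (l * (sec_sup S x - g) < l * y1) by (apply Rmult_lt_compat_l; lra).
    unfold g in *; lra.
Qed.

Lemma shadow_facts S a b : convex S -> (exists q, S q) -> (forall x y, S (x,y) -> a <= x <= b) ->
  a <= shadow_inf S <= shadow_sup S /\ shadow_sup S <= b /\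
  (forall x, shadow S x -> shadow_inf S <= x <= shadow_sup S) /\
  (forall e, 0 < e -> exists x1, shadow S x1 /\ x1 < shadow_inf S + e) /\
  (forall e, 0 < e -> exists x2, shadow S x2 /\ shadow_sup S - e < x2).
Proof.
  intros Hc [[x0 y0] H0] Hb.
  assert (Hx0 : shadow S x0) by (exists y0; auto).
  assert (Hu : is_lub (shadow S) (shadow_sup S)).
  { apply sup_spec with b; [exists x0; auto | intros x [y Hy]; apply (Hb _ _ Hy)]. }
  assert (Hu' : is_lub (fun x => shadow S (-x)) (sup (fun x => shadow S (- x)))).
  { apply sup_spec with (-a).
    - exists (-x0). rewrite Ropp_involutive. auto.
    - intros x [y Hy]. specialize (Hb _ _ Hy). lra. }
  unfold shadow_inf.
  assert (A1 : shadow_sup S <= b) by (apply Hu; intros x [y Hy]; apply (Hb _ _ Hy)).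
  assert (A2 : sup (fun x => shadow S (- x)) <= - a).
  { apply Hu'. intros x [y Hy]. specialize (Hb _ _ Hy). lra. }
  assert (A3 : forall x, shadow S x -> - sup (fun x => shadow S (- x)) <= x <= shadow_sup S).
  { intros x Hx. split; [|apply Hu; auto].
    assert (- x <= sup (fun x => shadow S (- x))); [|lra].
    apply Hu'. rewrite Ropp_involutive; auto. }
  specialize (A3 x0 Hx0) as A0.
  repeat split; try lra; [apply A3; auto .. | |].
  - intros e He. destruct (lub_approx _ _ e Hu' He) as [x1 [H1 H2]].
    exists (-x1). split; auto. lra.
  - intros e He. destruct (lub_approx _ _ e Hu He) as [x2 [H1 H2]]. exists x2. auto.
Qed.

(** * Integrals over convex sets *)

Lemma continuous_eps (g : R -> R) z : continuous g z ->
  forall eps, 0 < eps -> exists del, 0 < del /\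
    forall x, Rabs (x - z) < del -> Rabs (g x - g z) < eps.
Proof.
  intros Hg eps He. apply continuity_pt_filterlim in Hg.
  destruct (Hg eps He) as [del [Hd Hx]]. exists del. split; [exact Hd|].
  intros x Hxz. destruct (Req_dec x z) as [->|N].
  - rewrite Rminus_diag, Rabs_R0. exact He.
  - apply (Hx x). split; [split; [exact I | auto] | exact Hxz].
Qed.

Lemma lipschitz_at_continuous (g : R -> R) z K r : 0 < r ->
  (forall x, Rabs (x - z) < r -> Rabs (g x - g z) <= K * Rabs (x - z)) -> continuous g z.
Proof.
  intros Hr Hg. apply continuous_of_eps. intros eps He.
  exists (Rmin r (eps / (Rabs K + 1))). split.
  { apply Rmin_pos; [lra|]. apply Rdiv_lt_0_compat; [lra|]. generalize (Rabs_pos K); lra. }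
  intros x Hx. assert (Hx1 := Rlt_le_trans _ _ _ Hx (Rmin_l _ _)).
  assert (Hx2 := Rlt_le_trans _ _ _ Hx (Rmin_r _ _)).
  eapply Rle_lt_trans; [apply (Hg x Hx1)|].
  apply Rle_lt_trans with ((Rabs K + 1) * Rabs (x - z)).
  - generalize (Rle_abs K) (Rabs_pos (x - z)). nra.
  - apply Rmult_lt_reg_r with (/ (Rabs K + 1));
      [apply Rinv_0_lt_compat; generalize (Rabs_pos K); lra|].
    replace ((Rabs K + 1) * Rabs (x - z) * / (Rabs K + 1)) with (Rabs (x - z))
      by (field; generalize (Rabs_pos K); lra).
    exact Hx2.
Qed.

Lemma RInt_section_variation (h : pt -> R) x z s t s' t' c d e M : jcont h ->
  c <= s <= d -> c <= t <= d -> c <= s' <= d -> c <= t' <= d ->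
  (forall y, c <= y <= d -> Rabs (h (x,y) - h (z,y)) <= e) ->
  (forall y, c <= y <= d -> Rabs (h (z,y)) <= M) ->
  Rabs (RInt (fun y => h (x,y)) s t - RInt (fun y => h (z,y)) s' t') <=
    e * (d - c) + M * (Rabs (s - s') + Rabs (t - t')).
Proof.
  intros hc Hs Ht Hs' Ht' He HM. set (F := fun y => h (z,y)).
  assert (In : forall u v y, c <= u <= d -> c <= v <= d -> Rmin u v <= y <= Rmax u v ->
    c <= y <= d).
  { intros u v y Hu Hv Hy. split.
    - eapply Rle_trans; [|apply Hy]. apply Rmin_glb; lra.
    - eapply Rle_trans; [apply Hy|]. apply Rmax_lub; lra. }
  assert (Bd : forall u v, c <= u <= d -> c <= v <= d -> Rabs (RInt F u v) <= M * Rabs (v - u)).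
  { intros u v Hu Hv. apply abs_RInt_le_const_abs; [apply ex_RInt_section; auto|].
    intros y Hy. apply HM, (In u v); auto. }
  assert (Split : RInt (fun y => h (x,y)) s t - RInt F s' t' =
     RInt (fun y => h (x,y) - h (z,y)) s t + (RInt F s s' + RInt F t' t)).
  { rewrite (RInt_minus (fun y => h (x,y)) F) by (apply ex_RInt_section; auto).
    rewrite <- (RInt_Chasles F s t' t), <- (RInt_Chasles F s s' t')
      by (apply ex_RInt_section; auto).
    unfold minus, plus, opp; simpl. ring. }
  assert (D1 : Rabs (RInt (fun y => h (x,y) - h (z,y)) s t) <= e * (d - c)).
  { eapply Rle_trans.
    - apply abs_RInt_le_const_abs.
      + apply (ex_RInt_minus (fun y => h (x,y)) F); apply ex_RInt_section; auto.
      + intros y Hy. apply He, (In s t); auto.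
    - assert (0 <= e) by (eapply Rle_trans; [apply Rabs_pos | apply (He c); lra]).
      apply Rmult_le_compat_l; auto. apply Rabs_le; lra. }
  assert (D2 := Bd s s' Hs Hs'). assert (D3 := Bd t' t Ht' Ht).
  rewrite Rabs_minus_sym in D2. fold F. rewrite Split.
  eapply Rle_trans; [apply Rabs_triang|].
  assert (Rabs (RInt F s s' + RInt F t' t) <= M * (Rabs (s - s') + Rabs (t - t'))).
  { eapply Rle_trans; [apply Rabs_triang|]. lra. }
  lra.
Qed.

Lemma continuous_RInt_var (h : pt -> R) (l u : R -> R) a b c d z r :
  jcont h -> 0 < r ->
  (forall x, Rabs (x - z) < r -> a <= x <= b /\ c <= l x <= d /\ c <= u x <= d) ->
  continuous l z -> continuous u z ->
  continuous (fun x => RInt (fun y => h (x,y)) (l x) (u x)) z.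
Proof.
  intros hc Hr Hdom Hl Hu.
  destruct (jcont_bounded h a b c d hc) as [M [HM0 HM]].
  destruct (Hdom z) as (Hz & Hlz & Huz); [rewrite Rminus_diag, Rabs_R0; lra|].
  apply continuous_of_eps. intros eps Heps.
  set (e1 := eps / (2 * (d - c) + 2)).
  assert (He1 : 0 < e1) by (unfold e1; apply Rdiv_lt_0_compat; lra).
  assert (T1 : e1 * (d - c) < eps / 2).
  { unfold e1. apply Rmult_lt_reg_r with (2 * (d - c) + 2); [lra|].
    unfold Rdiv. field_simplify; [|lra]. nra. }
  set (e2 := eps / (4 * M + 4)).
  assert (He2 : 0 < e2) by (unfold e2; apply Rdiv_lt_0_compat; lra).
  assert (T2 : 2 * (M * e2) <= eps / 2).
  { unfold e2. apply Rmult_le_reg_r with (4 * M + 4); [lra|].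
    unfold Rdiv. field_simplify; [|lra]. nra. }
  destruct (uniform_continuity_2d (fun u v => h (u,v)) a b c d (fun x y _ _ => hc x y)
    (mkposreal _ He1)) as [du Hdu]; simpl in Hdu.
  destruct (continuous_eps l z Hl e2 He2) as [dl [Hdl Hl']].
  destruct (continuous_eps u z Hu e2 He2) as [dv [Hdv Hu']].
  exists (Rmin (Rmin r du) (Rmin dl dv)). split; [repeat apply Rmin_pos; auto; apply cond_pos|].
  intros x Hx.
  assert (Hxz : Rabs (x - z) < r /\ Rabs (x - z) < du /\ Rabs (x - z) < dl /\ Rabs (x - z) < dv)
    by (unfold Rmin in Hx; case_Rle; repeat split; lra).
  destruct Hxz as (Hxr & Hxu & Hxl & Hxv).
  destruct (Hdom x Hxr) as (Hxab & Hlx & Hux).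
  specialize (Hl' x Hxl). specialize (Hu' x Hxv).
  eapply Rle_lt_trans; [apply (RInt_section_variation h x z _ _ _ _ c d e1 M); auto|].
  - intros y Hy. left. apply Hdu; try lra. rewrite Rminus_diag, Rabs_R0. apply cond_pos.
  - nra.
Qed.

Lemma sec_sup_lipschitz S c d x1 x2 z : convex S -> (forall x y, S (x,y) -> c <= y <= d) ->
  shadow S x1 -> shadow S x2 -> x1 < z < x2 ->
  exists K r, 0 < r /\
    forall x, Rabs (x - z) < r -> Rabs (sec_sup S x - sec_sup S z) <= K * Rabs (x - z).
Proof.
  intros Hc Hb H1 H2 Hz.
  set (eta := Rmin (z - x1) (x2 - z) / 2).
  assert (Heta : 0 < eta /\ x1 + eta <= z - eta /\ z + eta <= x2 - eta)
    by (unfold eta, Rmin; case_Rle; lra).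
  assert (Hsh : forall x, x1 <= x <= x2 -> shadow S x)
    by (intros; apply (shadow_between S x1 x2); auto).
  exists ((d - c) / eta), eta. split; [lra|]. intros x Hx. apply Rabs_def2 in Hx.
  apply (concave_lipschitz (sec_sup S) x1 x2 c d eta); try lra.
  - intros u v l Hu Hv Hl. apply (sec_sup_concave S c d); auto.
  - intros u Hu. destruct (section_facts S u c d Hc (Hsh u Hu) (Hb u)) as (A1 & A2 & _). lra.
Qed.

Lemma continuous_sec_bounds S c d x1 x2 z : convex S -> (forall x y, S (x,y) -> c <= y <= d) ->
  shadow S x1 -> shadow S x2 -> x1 < z < x2 ->
  continuous (sec_sup S) z /\ continuous (sec_inf S) z.
Proof.
  intros Hc Hb H1 H2 Hz. split.
  - destruct (sec_sup_lipschitz S c d x1 x2 z) as (K & r & Hr & HK); auto.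
    exact (lipschitz_at_continuous _ z K r Hr HK).
  - destruct (sec_sup_lipschitz (reflect_y S) (- d) (- c) x1 x2 z) as (K & r & Hr & HK);
      auto using convex_reflect_y; try (apply shadow_reflect_y; auto).
    { intros x y Hy. unfold reflect_y in Hy; simpl in Hy. specialize (Hb _ _ Hy). lra. }
    apply (lipschitz_at_continuous _ z K r Hr). intros x Hx. unfold sec_inf.
    rewrite <- Rabs_Ropp. replace (- (- sec_sup (reflect_y S) x - - sec_sup (reflect_y S) z))
      with (sec_sup (reflect_y S) x - sec_sup (reflect_y S) z) by ring. auto.
Qed.

Definition sec_integral (S : pt -> Prop) (h : pt -> R) (x : R) : R :=
  RInt (fun y => h (x,y)) (sec_inf S x) (sec_sup S x).

Lemma continuous_sec_integral S h a b c d x1 x2 z : convex S ->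
  (forall x y, S (x,y) -> a <= x <= b /\ c <= y <= d) -> jcont h ->
  shadow S x1 -> shadow S x2 -> x1 < z < x2 -> continuous (sec_integral S h) z.
Proof.
  intros Hc Hb hc H1 H2 Hz.
  assert (Hby : forall x y, S (x,y) -> c <= y <= d) by (intros x y H; apply (Hb x y H)).
  destruct (continuous_sec_bounds S c d x1 x2 z Hc Hby H1 H2 Hz) as [Cu Cl].
  apply (continuous_RInt_var h (sec_inf S) (sec_sup S) a b c d z (Rmin (z - x1) (x2 - z)));
    auto; [apply Rmin_pos; lra|].
  intros x Hx. apply Rabs_def2 in Hx. unfold Rmin in Hx.
  assert (Hsh : shadow S x) by (apply (shadow_between S x1 x2); auto; case_Rle; lra).
  destruct (section_facts S x c d Hc Hsh (Hby x)) as (A1 & A2 & _).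
  destruct Hsh as [y Hy]. split; [apply (Hb x y Hy)|]. lra.
Qed.

Lemma ind_1 (S : pt -> Prop) q : S q -> ind S q = 1.
Proof. intros H. unfold ind. destruct (excluded_middle_informative (S q)); tauto. Qed.

Lemma ind_0 (S : pt -> Prop) q : ~ S q -> ind S q = 0.
Proof. intros H. unfold ind. destruct (excluded_middle_informative (S q)); tauto. Qed.

Lemma ind_01 (S : pt -> Prop) q : 0 <= ind S q <= 1.
Proof. unfold ind. destruct (excluded_middle_informative (S q)); lra. Qed.

Lemma RInt_ind_section S h c d x : convex S -> (forall x y, S (x,y) -> c <= y <= d) -> jcont h ->
  ex_RInt (fun y => ind S (x,y) * h (x,y)) c d /\
  (shadow S x -> RInt (fun y => ind S (x,y) * h (x,y)) c d = sec_integral S h x) /\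
  (~ shadow S x -> RInt (fun y => ind S (x,y) * h (x,y)) c d = 0).
Proof.
  intros Hc Hb hc. set (F := fun y => ind S (x,y) * h (x,y)).
  destruct (classic (shadow S x)) as [HP|HP].
  - destruct (section_facts S x c d Hc HP (Hb x)) as (A1 & A2 & A3 & A4).
    set (l := sec_inf S x) in *. set (u := sec_sup S x) in *.
    destruct (RInt_eq0 F c l) as [X1 V1].
    { intros y Hy. rewrite Rmin_left, Rmax_right in Hy by lra. unfold F.
      rewrite ind_0; [ring|]. intro Hs. specialize (A3 y Hs). lra. }
    destruct (RInt_eq0 F u d) as [X3 V3].
    { intros y Hy. rewrite Rmin_left, Rmax_right in Hy by lra. unfold F.
      rewrite ind_0; [ring|]. intro Hs. specialize (A3 y Hs). lra. }
    assert (E2 : forall y, Rmin l u < y < Rmax l u -> h (x,y) = F y).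
    { intros y Hy. rewrite Rmin_left, Rmax_right in Hy by lra. unfold F.
      rewrite ind_1; [ring|]. apply A4. lra. }
    assert (X2 : ex_RInt F l u) by (apply ex_RInt_ext with (1 := E2); apply ex_RInt_section; auto).
    assert (X12 : ex_RInt F c u) by (apply ex_RInt_Chasles with l; auto).
    split; [apply ex_RInt_Chasles with u; auto|]. split; [|tauto].
    intros _. unfold sec_integral. fold l u.
    rewrite <- (RInt_Chasles F c u d), <- (RInt_Chasles F c l u) by auto.
    rewrite V1, V3, (RInt_ext _ _ _ _ E2). unfold plus; simpl. ring.
  - destruct (RInt_eq0 F c d) as [X V].
    { intros y _. unfold F. rewrite ind_0; [ring|]. intro Hs. apply HP. exists y; auto. }
    repeat split; auto. tauto.
Qed.

Lemma box_int_convex S h a b c d : a <= b -> c <= d -> convex S ->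
  (forall x y, S (x,y) -> a <= x <= b /\ c <= y <= d) -> jcont h ->
  exists I, box_int a b c d (fun q => ind S q * h q) I.
Proof.
  intros Hab Hcd Hc Hb hc.
  assert (Hbx : forall x y, S (x,y) -> a <= x <= b) by (intros x y H; apply (Hb x y H)).
  assert (Hby : forall x y, S (x,y) -> c <= y <= d) by (intros x y H; apply (Hb x y H)).
  destruct (jcont_bounded h a b c d hc) as [M [HM0 HM]].
  set (Fin := fun x => RInt (fun y => ind S (x,y) * h (x,y)) c d).
  assert (Hin := fun x => RInt_ind_section S h c d x Hc Hby hc).
  assert (FinB : forall x, Rabs (Fin x) <= M * (d - c)).
  { intros x. rewrite Rmult_comm. apply abs_RInt_le_const; auto; [apply Hin|].
    intros t Ht. destruct (classic (S (x,t))) as [Hs|Hs].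
    - rewrite ind_1, Rmult_1_l by auto. apply HM; auto. apply (Hbx _ _ Hs).
    - rewrite ind_0, Rmult_0_l, Rabs_R0 by auto. auto. }
  assert (Fout : ex_RInt Fin a b).
  { destruct (classic (exists q, S q)) as [Hne|Hne].
    2:{ apply ex_RInt_ext with (fun _ => 0); [|apply ex_RInt_const].
        intros x _. symmetry. apply Hin. intros [y Hy]. apply Hne. eexists; eauto. }
    destruct (shadow_facts S a b Hc Hne Hbx) as (P1 & P2 & P3 & P4 & P5).
    apply (ex_RInt_inner Fin a b (shadow_inf S) (shadow_sup S) (M * (d - c))); try lra; auto.
    - intros x Hx. apply Hin. intro HP. apply Hx. apply P3; auto.
    - intros eta Heta Hle.
      destruct (P4 eta Heta) as [x1 [Hx1 Hx1']]. destruct (P5 eta Heta) as [x2 [Hx2 Hx2']].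
      apply ex_RInt_ext with (sec_integral S h).
      + intros x Hx. rewrite Rmin_left, Rmax_right in Hx by lra. symmetry. apply Hin.
        apply (shadow_between S x1 x2); auto; lra.
      + apply (@ex_RInt_continuous R_CompleteNormedModule). intros z Hz.
        rewrite Rmin_left, Rmax_right in Hz by lra.
        apply (continuous_sec_integral S h a b c d x1 x2); auto; lra. }
  exists (RInt Fin a b). do 2 (split; [auto|]). split.
  { intros x y Hn. rewrite ind_0; [ring|]. intro Hs. apply Hn. apply Hb; auto. }
  split; [intros x _; apply Hin|]. split; auto.
Qed.

Fixpoint comb_weights (l : R) (w1 w2 : list R) : list R :=
  match w1, w2 with
  | a :: w1', b :: w2' => (l * a + (1 - l) * b) :: comb_weights l w1' w2'
  | _, _ => nil
  end.

Lemma comb_weights_spec l vs : forall w1 w2, length w1 = length vs -> length w2 = length vs ->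
  Forall (fun c => 0 <= c) w1 -> Forall (fun c => 0 <= c) w2 -> 0 <= l <= 1 ->
  length (comb_weights l w1 w2) = length vs /\ Forall (fun c => 0 <= c) (comb_weights l w1 w2) /\
  fold_right Rplus 0 (comb_weights l w1 w2) =
    l * fold_right Rplus 0 w1 + (1-l) * fold_right Rplus 0 w2 /\
  lincomb (comb_weights l w1 w2) vs = (l * fst (lincomb w1 vs) + (1-l) * fst (lincomb w2 vs),
                                       l * snd (lincomb w1 vs) + (1-l) * snd (lincomb w2 vs)).
Proof.
  induction vs as [|v vs IH]; intros w1 w2 L1 L2 F1 F2 Hl.
  - destruct w1, w2; simpl in *; try discriminate. repeat split; auto; [ring | f_equal; ring].
  - destruct w1 as [|a w1], w2 as [|b w2]; simpl in *; try discriminate.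
    inversion F1; inversion F2; subst.
    destruct (IH w1 w2) as (A1 & A2 & A3 & A4); auto.
    repeat split; simpl.
    + f_equal; auto.
    + constructor; auto. nra.
    + rewrite A3. ring.
    + rewrite A4. unfold vadd, vscal; simpl. f_equal; ring.
Qed.

Lemma in_hull_convex vs : convex (in_hull vs).
Proof.
  intros x1 y1 x2 y2 l [w1 (L1 & F1 & S1 & E1)] [w2 (L2 & F2 & S2 & E2)] Hl.
  destruct (comb_weights_spec l vs w1 w2) as (A1 & A2 & A3 & A4); auto.
  exists (comb_weights l w1 w2). repeat split; auto.
  - rewrite A3, S1, S2. ring.
  - rewrite A4, <- E1, <- E2. reflexivity.
Qed.

Lemma lincomb_bound vs B : 0 <= B ->
  (forall v, In v vs -> Rabs (fst v) <= B /\ Rabs (snd v) <= B) ->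
  forall w, Forall (fun c => 0 <= c) w ->
  Rabs (fst (lincomb w vs)) <= fold_right Rplus 0 w * B /\
  Rabs (snd (lincomb w vs)) <= fold_right Rplus 0 w * B.
Proof.
  intros HB0 HB. induction vs as [|v vs IH]; intros w Fw.
  - assert (0 <= fold_right Rplus 0 w) by (induction Fw; simpl; lra).
    destruct w; simpl in *; rewrite Rabs_R0; split; nra.
  - destruct w as [|c w]; simpl; [rewrite Rabs_R0; lra|].
    inversion Fw; subst.
    destruct (IH (fun v' H' => HB v' (or_intror H')) w) as [I1 I2]; auto.
    destruct (HB v (or_introl eq_refl)) as [B1 B2].
    unfold vadd, vscal; simpl. split; (eapply Rle_trans; [apply Rabs_triang|]);
      rewrite Rabs_mult, (Rabs_right c) by lra; nra.
Qed.

Definition square (R0 : R) (q : pt) : Prop := -R0 <= fst q <= R0 /\ -R0 <= snd q <= R0.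

Lemma square_convex R0 : convex (square R0).
Proof.
  intros x1 y1 x2 y2 l [H1 H2] [H3 H4] Hl. unfold square in *; simpl in *. split; split; nra.
Qed.

Lemma polygon_convex Q : is_convex_polygon Q -> convex Q.
Proof.
  intros [vs [HQ _]] x1 y1 x2 y2 l H1 H2 Hl. apply HQ.
  apply (in_hull_convex vs); auto; apply HQ; auto.
Qed.

Lemma coords_bounded (vs : list pt) :
  exists B, 0 <= B /\ forall v, In v vs -> Rabs (fst v) <= B /\ Rabs (snd v) <= B.
Proof.
  induction vs as [|v vs [B [HB0 HB]]]; [exists 0; split; [lra | intros v []]|].
  exists (Rabs (fst v) + Rabs (snd v) + B).
  generalize (Rabs_pos (fst v)) (Rabs_pos (snd v)). intros. split; [lra|].
  intros v' [<-|Hv]; [lra|]. specialize (HB v' Hv). lra.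
Qed.

Lemma polygon_bounded Q : is_convex_polygon Q -> exists R0, 0 < R0 /\ forall q, Q q -> square R0 q.
Proof.
  intros [vs [HQ _]]. destruct (coords_bounded vs) as [B [B0 HB]].
  exists (B + 1). split; [lra|].
  intros q Hq. apply HQ in Hq. destruct Hq as [w (L & F & S & E)].
  destruct (lincomb_bound vs B B0 HB w F) as [I1 I2]. rewrite S, <- E in *.
  apply Rabs_le_between in I1, I2. unfold square. lra.
Qed.

Lemma integral_on_box_int S g R0 : 0 <= R0 -> convex S -> (forall q, S q -> square R0 q) ->
  jcont g -> box_int (-R0) R0 (-R0) R0 (fun q => ind S q * g q) (integral_on S g).
Proof.
  intros HR Hc HS hg.
  destruct (box_int_convex S g (-R0) R0 (-R0) R0) as [I HI]; try lra; auto.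
  { intros x y Hxy. apply (HS (x,y) Hxy). }
  unfold integral_on. rewrite (integral2_box_int _ _ _ _ _ _ HI). exact HI.
Qed.

(** * The integrand of H *)

Definition sqdist (p : nat -> pt) (k : nat) (q : pt) : R :=
  (fst q - fst (p k))^2 + (snd q - snd (p k))^2.

Lemma sqdist_ge0 p k q : 0 <= sqdist p k q.
Proof. unfold sqdist. apply Rplus_le_le_0_compat; apply pow2_ge_0. Qed.

Lemma vnorm_le_sqdist p v w q :
  vnorm (vsub q (p v)) <= vnorm (vsub q (p w)) <-> sqdist p v q <= sqdist p w q.
Proof.
  change (sqrt (sqdist p v q) <= sqrt (sqdist p w q) <-> sqdist p v q <= sqdist p w q).
  split; intros H; [apply sqrt_le_0 | apply sqrt_le_1]; auto using sqdist_ge0.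
Qed.

Lemma V2_sqdist Q n p i j q : V2 Q n p i j q <-> Q q /\ forall v w, (v = i \/ v = j) ->
  (w < n)%nat -> w <> i -> w <> j -> sqdist p v q <= sqdist p w q.
Proof.
  unfold V2. split; intros [H1 H2]; split; auto;
    intros v w Hv Hw N1 N2; apply vnorm_le_sqdist; auto.
Qed.

Lemma sqdist_diff_affine p a b x1 y1 x2 y2 l :
  sqdist p a (l*x1 + (1-l)*x2, l*y1 + (1-l)*y2) - sqdist p b (l*x1 + (1-l)*x2, l*y1 + (1-l)*y2) =
  l * (sqdist p a (x1,y1) - sqdist p b (x1,y1)) + (1-l) * (sqdist p a (x2,y2) - sqdist p b (x2,y2)).
Proof. unfold sqdist; simpl. ring. Qed.

Lemma V2_convex Q n p i j : convex Q -> convex (V2 Q n p i j).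
Proof.
  intros HQ x1 y1 x2 y2 l H1 H2 Hl. apply V2_sqdist in H1, H2. apply V2_sqdist.
  destruct H1 as [Q1 C1], H2 as [Q2 C2]. split; [apply HQ; auto|].
  intros v w Hv Hw N1 N2. specialize (C1 v w Hv Hw N1 N2). specialize (C2 v w Hv Hw N1 N2).
  assert (E := sqdist_diff_affine p v w x1 y1 x2 y2 l). nra.
Qed.

Definition pair_cost (D : nat -> R) (ab : nat * nat) : R := / 2 * (D (fst ab) + D (snd ab)).

(* The seed pair (0,1) is the one used by [minC]. *)
Definition min_pairs (val : nat * nat -> R) (l : list (nat * nat)) : R :=
  fold_right (fun ab acc => Rmin (val ab) acc) (val (0%nat,1%nat)) l.

Lemma minC_min_pairs n p q : minC n p q = min_pairs (pair_cost (fun k => sqdist p k q)) (pairsC n).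
Proof.
  unfold minC, min_pairs.
  assert (E : forall ab, f (vnorm (vsub q (p (fst ab)))) (vnorm (vsub q (p (snd ab)))) =
    pair_cost (fun k => sqdist p k q) ab).
  { intros ab. unfold f, pair_cost, vnorm, vsub.
    rewrite !pow2_sqrt by (apply Rplus_le_le_0_compat; apply pow2_ge_0). reflexivity. }
  induction (pairsC n) as [|ab l IH]; simpl; [apply (E (0%nat,1%nat))|]. rewrite IH, E. reflexivity.
Qed.

Lemma min_pairs_le val l ab : In ab l -> min_pairs val l <= val ab.
Proof.
  induction l as [|x l IH]; simpl; [tauto|]. intros [->|H]; [apply Rmin_l|].
  eapply Rle_trans; [apply Rmin_r | apply IH; auto].
Qed.

Lemma min_pairs_ge val l m : (forall ab, In ab l -> m <= val ab) -> m <= val (0%nat,1%nat) ->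
  m <= min_pairs val l.
Proof. induction l as [|x l IH]; simpl; intros H H0; auto. apply Rmin_glb; auto. Qed.

Lemma Rabs_Rmin_le a b a' b' L : Rabs (a - a') <= L -> Rabs (b - b') <= L ->
  Rabs (Rmin a b - Rmin a' b') <= L.
Proof.
  intros H1 H2. apply Rabs_le_between in H1, H2.
  unfold Rmin; destruct (Rle_dec a b), (Rle_dec a' b'); apply Rabs_le; lra.
Qed.

Lemma min_pairs_lipschitz v1 v2 l L : (forall ab, In ab l -> Rabs (v1 ab - v2 ab) <= L) ->
  Rabs (v1 (0%nat,1%nat) - v2 (0%nat,1%nat)) <= L -> Rabs (min_pairs v1 l - min_pairs v2 l) <= L.
Proof. induction l as [|x l IH]; simpl; intros H H0; auto. apply Rabs_Rmin_le; auto. Qed.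

Lemma jcont_sqdist p k : jcont (sqdist p k).
Proof.
  unfold sqdist. apply jcont_plus.
  - apply jcont_ext with (fun q => (fst q - fst (p k)) * (fst q - fst (p k))); [intros; ring|].
    apply jcont_mult; apply jcont_minus; auto using jcont_fst, jcont_const.
  - apply jcont_ext with (fun q => (snd q - snd (p k)) * (snd q - snd (p k))); [intros; ring|].
    apply jcont_mult; apply jcont_minus; auto using jcont_snd, jcont_const.
Qed.

Lemma jcont_minC n p : jcont (minC n p).
Proof.
  apply jcont_ext with (fun q => min_pairs (pair_cost (fun k => sqdist p k q)) (pairsC n)).
  { intros q. symmetry. apply minC_min_pairs. }
  unfold min_pairs. induction (pairsC n) as [|ab l IH]; simpl.
  - unfold pair_cost. apply jcont_mult; [apply jcont_const | apply jcont_plus; apply jcont_sqdist].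
  - apply (jcont_min (fun q => pair_cost (fun k => sqdist p k q) ab)); auto.
    unfold pair_cost. apply jcont_mult; [apply jcont_const | apply jcont_plus; apply jcont_sqdist].
Qed.

Lemma in_pairsC n a b : In (a,b) (pairsC n) <-> (a < b < n)%nat.
Proof.
  unfold pairsC. rewrite in_flat_map. split.
  - intros [x [Hx Hy]]. apply in_seq in Hx. apply in_map_iff in Hy.
    destruct Hy as [a' [E Ha]]. inversion E; subst. apply in_seq in Ha. lia.
  - intros H. exists b. split; [apply in_seq; lia|]. apply in_map_iff. exists a.
    split; auto. apply in_seq; lia.
Qed.

Lemma in_others n i j : In j (others n i) <-> (j < n)%nat /\ j <> i.
Proof.
  unfold others. rewrite filter_In, in_seq, Bool.negb_true_iff, PeanoNat.Nat.eqb_neq. lia.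
Qed.

Lemma others_nodup n i : NoDup (others n i).
Proof. apply NoDup_filter, seq_NoDup. Qed.

Lemma others_length n i : (length (others n i) <= n)%nat.
Proof. unfold others. rewrite <- (length_seq n 0) at 2. apply filter_length_le. Qed.

Definition lsum {A : Type} (l : list A) (F : A -> R) : R :=
  fold_right (fun j acc => F j + acc) 0 l.

Lemma lsum_ext {A} (l : list A) F1 F2 : (forall j, In j l -> F1 j = F2 j) -> lsum l F1 = lsum l F2.
Proof. induction l as [|x l IH]; simpl; intros H; auto. rewrite H, IH; auto. Qed.

Lemma lsum_nonneg {A} (l : list A) F : (forall j, In j l -> 0 <= F j) -> 0 <= lsum l F.
Proof.
  induction l as [|x l IH]; simpl; intros H; [lra|].
  generalize (H x (or_introl eq_refl)) (IH (fun j Hj => H j (or_intror Hj))). lra.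
Qed.

Lemma lsum_ge_term {A} (l : list A) F x : In x l -> (forall j, In j l -> 0 <= F j) ->
  F x <= lsum l F.
Proof.
  induction l as [|y l IH]; simpl; intros Hx H; [tauto|].
  destruct Hx as [->|Hx].
  - generalize (lsum_nonneg l F (fun j Hj => H j (or_intror Hj))). lra.
  - generalize (H y (or_introl eq_refl)) (IH Hx (fun j Hj => H j (or_intror Hj))). lra.
Qed.

Lemma lsum_0 {A} (l : list A) F : (forall j, In j l -> F j = 0) -> lsum l F = 0.
Proof. induction l as [|y l IH]; simpl; intros H; auto. rewrite H, IH; auto. ring. Qed.

Lemma lsum_single {A} (l : list A) F x : NoDup l -> In x l ->
  (forall j, In j l -> j <> x -> F j = 0) -> lsum l F = F x.
Proof.
  induction l as [|y l IH]; simpl; intros Hd Hx H; [tauto|].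
  inversion Hd; subst. destruct Hx as [->|Hx].
  - rewrite (lsum_0 l F); [ring|]. intros j Hj. apply H; auto. intro; subst; auto.
  - rewrite H, IH; auto; [ring | intro; subst; auto].
Qed.

Lemma lsum_abs {A} (l : list A) F B : (forall j, In j l -> Rabs (F j) <= B) ->
  Rabs (lsum l F) <= INR (length l) * B.
Proof.
  induction l as [|y l IH]; intros H; simpl length; [simpl; rewrite Rabs_R0; lra|].
  rewrite S_INR. simpl lsum. eapply Rle_trans; [apply Rabs_triang|].
  generalize (H y (or_introl eq_refl)) (IH (fun j Hj => H j (or_intror Hj))). lra.
Qed.

Lemma box_int_lsum {A} (l : list A) a b c d (g : A -> pt -> R) (I : A -> R) : a <= b -> c <= d ->
  (forall j, In j l -> box_int a b c d (g j) (I j)) ->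
  box_int a b c d (fun q => lsum l (fun j => g j q)) (lsum l I).
Proof.
  intros Hab Hcd. induction l as [|y l IH]; simpl; intros H; [apply box_int_0; auto|].
  apply box_int_ext with (fun q => g y q + 1 * lsum l (fun j => g j q)); [intros; ring|].
  replace (I y + lsum l I) with (I y + 1 * lsum l I) by ring. apply box_int_lin; auto.
Qed.

Lemma argmin (l : list nat) (D : nat -> R) : l <> nil ->
  exists a, In a l /\ forall w, In w l -> D a <= D w.
Proof.
  induction l as [|x [|y l'] IH]; intros Hne; [tauto| |].
  - exists x. split; [left; auto|]. intros w [<-|[]]. lra.
  - destruct IH as [a [Ha Hm]]; [discriminate|].
    destruct (Rle_dec (D x) (D a)).
    + exists x. split; [left; auto|]. intros w [<-|Hw]; [lra|]. specialize (Hm w Hw). lra.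
    + exists a. split; [right; auto|]. intros w [<-|Hw]; [lra|auto].
Qed.

Lemma two_nearest (D : nat -> R) n del : (2 <= n)%nat ->
  (forall u w, (u < n)%nat -> (w < n)%nat -> u <> w -> del < Rabs (D u - D w)) ->
  exists a0 b0, (a0 < n)%nat /\ (b0 < n)%nat /\ a0 <> b0 /\
    forall w, (w < n)%nat -> w <> a0 -> w <> b0 -> D a0 + del < D w /\ D b0 + del < D w.
Proof.
  intros Hn Hgap.
  destruct (argmin (seq 0 n) D) as [a0 [Ha0 Hm0]]; [destruct n; [lia|discriminate]|].
  apply in_seq in Ha0.
  destruct (argmin (others n a0) D) as [b0 [Hb0 Hm1]].
  { intro E. assert (Hin : In (if Nat.eqb a0 0 then 1 else 0)%nat (others n a0)).
    { apply in_others. destruct (Nat.eqb_spec a0 0); lia. }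
    rewrite E in Hin. exact Hin. }
  apply in_others in Hb0. exists a0, b0. do 3 (split; [lia|]).
  intros w Hw N1 N2.
  assert (G1 : D a0 <= D w) by (apply Hm0, in_seq; lia).
  assert (G2 : D b0 <= D w) by (apply Hm1, in_others; lia).
  pose proof (Hgap a0 w ltac:(lia) Hw ltac:(auto)) as G3.
  pose proof (Hgap b0 w ltac:(lia) Hw ltac:(auto)) as G4.
  rewrite Rabs_left1 in G3, G4 by lra. lra.
Qed.

Lemma min_pairs_two_nearest (D : nat -> R) n a0 b0 : (2 <= n)%nat -> (a0 < n)%nat -> (b0 < n)%nat ->
  a0 <> b0 -> (forall w, (w < n)%nat -> w <> a0 -> w <> b0 -> D a0 < D w /\ D b0 < D w) ->
  min_pairs (pair_cost D) (pairsC n) = / 2 * (D a0 + D b0).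
Proof.
  intros Hn Ha Hb Nab Hw.
  assert (Low : forall a b, a <> b -> (a < n)%nat -> (b < n)%nat -> D a0 + D b0 <= D a + D b).
  { intros a b N Ha' Hb'.
    destruct (PeanoNat.Nat.eq_dec a a0), (PeanoNat.Nat.eq_dec a b0),
      (PeanoNat.Nat.eq_dec b a0), (PeanoNat.Nat.eq_dec b b0); subst; try congruence; try lra;
    try (destruct (Hw b) as [H1 H2]; auto; lra); try (destruct (Hw a) as [H1 H2]; auto; lra).
    destruct (Hw a) as [H1 H2]; auto. destruct (Hw b) as [H3 H4]; auto. lra. }
  apply Rle_antisym.
  - destruct (PeanoNat.Nat.lt_ge_cases a0 b0).
    + eapply Rle_trans; [apply min_pairs_le with (ab := (a0,b0)); apply in_pairsC; lia|].
      unfold pair_cost; simpl; lra.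
    + eapply Rle_trans; [apply min_pairs_le with (ab := (b0,a0)); apply in_pairsC; lia|].
      unfold pair_cost; simpl; lra.
  - apply min_pairs_ge.
    + intros [a b] Hab. apply in_pairsC in Hab. unfold pair_cost; simpl.
      assert (D a0 + D b0 <= D a + D b) by (apply Low; lia). lra.
    + unfold pair_cost; simpl. assert (D a0 + D b0 <= D 0%nat + D 1%nat) by (apply Low; lia). lra.
Qed.

Definition shift (p : nat -> pt) (i : nat) (e1 e2 t : R) : nat -> pt :=
  upd p i (vadd (p i) (t * e1, t * e2)).

(* [(p_i - q) . e], the derivative at [t = 0] of [1/2 |q - (p_i + t e)|^2] *)
Definition half_sqdist_deriv (p : nat -> pt) i e1 e2 (q : pt) : R :=
  (fst (p i) - fst q) * e1 + (snd (p i) - snd q) * e2.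

Definition sqdist_incr (p : nat -> pt) i e1 e2 t q : R :=
  2 * t * half_sqdist_deriv p i e1 e2 q + t^2 * (e1^2 + e2^2).

Lemma shift_0 p i e1 e2 : shift p i e1 e2 0 = p.
Proof.
  apply functional_extensionality. intros k. unfold shift, upd.
  destruct (Nat.eqb_spec k i) as [->|]; auto.
  unfold vadd. destruct (p i); simpl. f_equal; ring.
Qed.

Lemma sqdist_shift p i e1 e2 t k q :
  sqdist (shift p i e1 e2 t) k q =
  sqdist p k q + (if Nat.eqb k i then sqdist_incr p i e1 e2 t q else 0).
Proof.
  unfold sqdist, shift, upd, sqdist_incr, half_sqdist_deriv.
  destruct (Nat.eqb_spec k i) as [->|]; [unfold vadd; simpl|]; ring.
Qed.

Lemma half_sqdist_deriv_bound p i e1 e2 q R0 : square R0 q -> square R0 (p i) ->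
  Rabs e1 <= 1 -> Rabs e2 <= 1 -> Rabs (half_sqdist_deriv p i e1 e2 q) <= 4 * R0.
Proof.
  intros [Hq1 Hq2] [Hp1 Hp2] He1 He2. unfold half_sqdist_deriv.
  eapply Rle_trans; [apply Rabs_triang|]. rewrite !Rabs_mult.
  assert (Rabs (fst (p i) - fst q) <= 2 * R0) by (apply Rabs_le; lra).
  assert (Rabs (snd (p i) - snd q) <= 2 * R0) by (apply Rabs_le; lra).
  generalize (Rabs_pos e1) (Rabs_pos e2) (Rabs_pos (fst (p i) - fst q))
    (Rabs_pos (snd (p i) - snd q)). nra.
Qed.

Lemma sqdist_incr_bound p i e1 e2 t q R0 : square R0 q -> square R0 (p i) ->
  Rabs e1 <= 1 -> Rabs e2 <= 1 -> Rabs t <= 1 ->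
  Rabs (sqdist_incr p i e1 e2 t q) <= (8 * R0 + 2) * Rabs t.
Proof.
  intros Hq Hp He1 He2 Ht. unfold sqdist_incr.
  assert (HA := half_sqdist_deriv_bound p i e1 e2 q R0 Hq Hp He1 He2).
  assert (He : e1^2 + e2^2 <= 2) by (apply Rabs_le_between in He1, He2; nra).
  assert (Ht2 : t^2 <= Rabs t) by (rewrite <- (pow2_abs t); generalize (Rabs_pos t); nra).
  eapply Rle_trans; [apply Rabs_triang|]. rewrite !Rabs_mult.
  rewrite (Rabs_right (t^2)) by (apply Rle_ge, pow2_ge_0).
  rewrite (Rabs_right (e1^2 + e2^2)) by (apply Rle_ge, Rplus_le_le_0_compat; apply pow2_ge_0).
  rewrite Rabs_right by lra.
  generalize (Rabs_pos t) (Rabs_pos (half_sqdist_deriv p i e1 e2 q)) (pow2_ge_0 t). nra.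
Qed.

(** * The first-order remainder *)

Definition deriv_integrand Q phi n p i e1 e2 (q : pt) : R :=
  lsum (others n i) (fun j => ind (V2 Q n p i j) q * (half_sqdist_deriv p i e1 e2 q * phi q)).

Definition remainder Q phi n p i e1 e2 t (q : pt) : R :=
  ind Q q * (minC n (shift p i e1 e2 t) q * phi q) - ind Q q * (minC n p q * phi q)
  - t * deriv_integrand Q phi n p i e1 e2 q.

Lemma remainder_out Q phi n p i e1 e2 t q : ~ Q q -> remainder Q phi n p i e1 e2 t q = 0.
Proof.
  intros Hq. unfold remainder, deriv_integrand. rewrite ind_0 by auto. rewrite lsum_0; [ring|].
  intros j _. rewrite ind_0; [ring|]. intros [H _]; auto.
Qed.

Section Separated.

Variables (Q : pt -> Prop) (phi : pt -> R) (n : nat) (p : nat -> pt) (i : nat) (e1 e2 t : R).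
Variables (q : pt) (del : R).
Hypotheses (Hn : (2 <= n)%nat) (HQ : Q q) (Hi : (i < n)%nat).
Hypothesis Hincr : Rabs (sqdist_incr p i e1 e2 t q) <= del.

Local Notation D k := (sqdist p k q).

Lemma sqdist_shift_order a w : w <> a -> D a + del < D w ->
  sqdist (shift p i e1 e2 t) a q < sqdist (shift p i e1 e2 t) w q.
Proof.
  intros N Hlt. rewrite !sqdist_shift. apply Rabs_le_between in Hincr. 
  destruct (Nat.eqb_spec a i), (Nat.eqb_spec w i); cbv iota; subst; try tauto; lra.
Qed.

(* [i] is one of the two nearest generators of [q], for [p] and for the shifted [p]. *)
Lemma remainder_top b : (b < n)%nat -> b <> i ->
  (forall w, (w < n)%nat -> w <> i -> w <> b -> D i + del < D w /\ D b + del < D w) ->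
  remainder Q phi n p i e1 e2 t q = phi q * (t^2 * (e1^2 + e2^2) / 2).
Proof.
  intros Hb Nb Top.
  assert (Hdel : 0 <= del) by (eapply Rle_trans; [apply Rabs_pos | exact Hincr]).
  assert (M0 : minC n p q = / 2 * (D i + D b)).
  { rewrite minC_min_pairs. apply (min_pairs_two_nearest (fun k => D k)); auto.
    intros w Hw N1 N2. destruct (Top w Hw N1 N2). split; lra. }
  assert (Mt : minC n (shift p i e1 e2 t) q = / 2 * (D i + sqdist_incr p i e1 e2 t q + D b)).
  { rewrite minC_min_pairs, (min_pairs_two_nearest _ n i b); auto.
    - rewrite !sqdist_shift, Nat.eqb_refl. destruct (Nat.eqb_spec b i); [lia|]. ring.
    - intros w Hw N1 N2. destruct (Top w Hw N1 N2).
      split; apply sqdist_shift_order; auto. }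
  assert (Dv : deriv_integrand Q phi n p i e1 e2 q = half_sqdist_deriv p i e1 e2 q * phi q).
  { unfold deriv_integrand. rewrite (lsum_single _ _ b).
    - rewrite ind_1; [ring|]. apply V2_sqdist. split; auto. intros v w Hv Hw N1 N2.
      destruct (Top w Hw N1 N2). destruct Hv as [-> | ->]; lra.
    - apply others_nodup.
    - apply in_others; lia.
    - intros j Hj Nj. apply in_others in Hj. rewrite ind_0; [ring|].
      intros HV. apply V2_sqdist in HV. destruct HV as [_ HV].
      specialize (HV j b (or_intror eq_refl) Hb ltac:(lia) ltac:(auto)).
      destruct (Top j ltac:(lia) ltac:(lia) Nj). lra. }
  unfold remainder. rewrite ind_1, M0, Mt, Dv by auto. unfold sqdist_incr. field.
Qed.

(* [i] is not among the two nearest generators, before or after the shift. *)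
Lemma remainder_off a0 b0 : (a0 < n)%nat -> (b0 < n)%nat -> a0 <> b0 -> i <> a0 -> i <> b0 ->
  (forall w, (w < n)%nat -> w <> a0 -> w <> b0 -> D a0 + del < D w /\ D b0 + del < D w) ->
  remainder Q phi n p i e1 e2 t q = 0.
Proof.
  intros Ha Hb N Na Nb Top.
  assert (Hdel : 0 <= del) by (eapply Rle_trans; [apply Rabs_pos | exact Hincr]).
  assert (M0 : minC n p q = / 2 * (D a0 + D b0)).
  { rewrite minC_min_pairs. apply (min_pairs_two_nearest (fun k => D k)); auto.
    intros w Hw N1 N2. destruct (Top w Hw N1 N2). split; lra. }
  assert (Mt : minC n (shift p i e1 e2 t) q = / 2 * (D a0 + D b0)).
  { rewrite minC_min_pairs, (min_pairs_two_nearest _ n a0 b0); auto.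
    - rewrite !sqdist_shift. destruct (Nat.eqb_spec a0 i), (Nat.eqb_spec b0 i); try lia.
      ring.
    - intros w Hw N1 N2. destruct (Top w Hw N1 N2).
      split; apply sqdist_shift_order; auto. }
  assert (Dv : deriv_integrand Q phi n p i e1 e2 q = 0).
  { unfold deriv_integrand. apply lsum_0. intros j Hj. apply in_others in Hj.
    rewrite ind_0; [ring|]. intros HV. apply V2_sqdist in HV. destruct HV as [_ HV].
    destruct (Top i Hi Na Nb).
    destruct (PeanoNat.Nat.eq_dec j a0) as [->|Nj].
    - specialize (HV i b0 (or_introl eq_refl) Hb ltac:(lia) ltac:(lia)). lra.
    - specialize (HV i a0 (or_introl eq_refl) Ha ltac:(lia) ltac:(lia)). lra. }
  unfold remainder. rewrite ind_1, M0, Mt, Dv by auto. ring.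
Qed.

Lemma remainder_separated :
  (forall a b, (a < b < n)%nat -> del < Rabs (D a - D b)) ->
  Rabs (remainder Q phi n p i e1 e2 t q) <= Rabs (phi q) * (t^2 * (e1^2 + e2^2) / 2).
Proof.
  intros Hgap.
  destruct (two_nearest (fun k => D k) n del Hn) as (a0 & b0 & Ha & Hb & N & Top).
  { intros u w Hu Hw N. destruct (PeanoNat.Nat.lt_ge_cases u w).
    - apply Hgap; lia.
    - rewrite Rabs_minus_sym. apply Hgap; lia. }
  assert (Hq2 : 0 <= t ^ 2 * (e1 ^ 2 + e2 ^ 2) / 2)
    by (generalize (pow2_ge_0 t) (pow2_ge_0 e1) (pow2_ge_0 e2); nra).
  destruct (PeanoNat.Nat.eq_dec i a0) as [<-|Na]; [|destruct (PeanoNat.Nat.eq_dec i b0) as [<-|Nb]].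
  - rewrite (remainder_top b0), Rabs_mult, (Rabs_right (_ / 2)) by (auto; lra). lra.
  - rewrite (remainder_top a0), Rabs_mult, (Rabs_right (_ / 2)); auto; try lra.
    intros w Hw N1 N2. destruct (Top w Hw N2 N1). auto.
  - rewrite (remainder_off a0 b0), Rabs_R0 by auto. apply Rmult_le_pos; [apply Rabs_pos | lra].
Qed.

End Separated.

Lemma pair_cost_shift p i e1 e2 t q a b : a <> b ->
  Rabs (pair_cost (fun k => sqdist (shift p i e1 e2 t) k q) (a,b) -
        pair_cost (fun k => sqdist p k q) (a,b)) <= Rabs (sqdist_incr p i e1 e2 t q) / 2.
Proof.
  intros N. unfold pair_cost; simpl. rewrite !sqdist_shift.
  set (d := sqdist_incr p i e1 e2 t q). assert (Hd := Rabs_pos d).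
  destruct (Nat.eqb_spec a i), (Nat.eqb_spec b i); cbv iota; try (subst; tauto);
    match goal with |- Rabs ?L <= _ =>
      first [ replace L with (/ 2 * d) by ring | replace L with 0 by ring ] end;
    rewrite ?Rabs_R0, ?Rabs_mult, ?(Rabs_right (/ 2)); lra.
Qed.

Lemma minC_shift_lipschitz n p i e1 e2 t q :
  Rabs (minC n (shift p i e1 e2 t) q - minC n p q) <= Rabs (sqdist_incr p i e1 e2 t q) / 2.
Proof.
  rewrite !minC_min_pairs. apply min_pairs_lipschitz.
  - intros [a b] Hab. apply in_pairsC in Hab. apply pair_cost_shift. lia.
  - apply pair_cost_shift. lia.
Qed.

Lemma deriv_integrand_bound Q phi n p i e1 e2 q R0 Mphi : Q q -> square R0 q -> square R0 (p i) ->
  Rabs e1 <= 1 -> Rabs e2 <= 1 -> Rabs (phi q) <= Mphi ->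
  Rabs (deriv_integrand Q phi n p i e1 e2 q) <= INR n * (4 * R0 * Mphi).
Proof.
  intros HQ Bq Bp He1 He2 Hphi.
  assert (Hh := half_sqdist_deriv_bound p i e1 e2 q R0 Bq Bp He1 He2).
  assert (X : Rabs (half_sqdist_deriv p i e1 e2 q) * Rabs (phi q) <= 4 * R0 * Mphi)
    by (apply Rmult_le_compat; auto using Rabs_pos).
  unfold deriv_integrand. eapply Rle_trans; [apply lsum_abs with (B := 4 * R0 * Mphi)|].
  - intros j _. rewrite !Rabs_mult. pose proof (ind_01 (V2 Q n p i j) q).
    rewrite (Rabs_right (ind _ _)) by lra.
    assert (0 <= Rabs (half_sqdist_deriv p i e1 e2 q) * Rabs (phi q)) by
      (apply Rmult_le_pos; apply Rabs_pos).
    nra.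
  - apply Rmult_le_compat_r; [|apply le_INR, others_length].
    eapply Rle_trans; [|exact X]. apply Rmult_le_pos; apply Rabs_pos.
Qed.

Lemma remainder_lipschitz Q phi n p i e1 e2 t q R0 Mphi : Q q -> square R0 q -> square R0 (p i) ->
  Rabs e1 <= 1 -> Rabs e2 <= 1 -> Rabs (phi q) <= Mphi ->
  Rabs (remainder Q phi n p i e1 e2 t q) <=
    Mphi * (Rabs (sqdist_incr p i e1 e2 t q) / 2) + Rabs t * (INR n * (4 * R0 * Mphi)).
Proof.
  intros HQ Bq Bp He1 He2 Hphi.
  assert (Hm := minC_shift_lipschitz n p i e1 e2 t q).
  assert (Hd := deriv_integrand_bound Q phi n p i e1 e2 q R0 Mphi HQ Bq Bp He1 He2 Hphi).
  unfold remainder. rewrite ind_1 by auto.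
  replace (1 * (minC n (shift p i e1 e2 t) q * phi q) - 1 * (minC n p q * phi q)
    - t * deriv_integrand Q phi n p i e1 e2 q) with
    (phi q * (minC n (shift p i e1 e2 t) q - minC n p q) - t * deriv_integrand Q phi n p i e1 e2 q)
    by ring.
  eapply Rle_trans; [apply Rabs_triang|]. rewrite Rabs_Ropp, !Rabs_mult.
  apply Rplus_le_compat; [apply Rmult_le_compat|apply Rmult_le_compat_l]; auto using Rabs_pos.
Qed.

Definition strip (p : nat -> pt) (a b : nat) (del R0 : R) (q : pt) : Prop :=
  square R0 q /\ Rabs (sqdist p a q - sqdist p b q) <= del.

Lemma strip_convex p a b del R0 : convex (strip p a b del R0).
Proof.
  intros x1 y1 x2 y2 l [B1 S1] [B2 S2] Hl. split; [apply square_convex; auto|].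
  rewrite sqdist_diff_affine. eapply Rle_trans; [apply Rabs_triang|]. rewrite !Rabs_mult.
  rewrite (Rabs_right l), (Rabs_right (1-l)) by lra. nra.
Qed.

(* The strip width bounds the change of the squared distance to [p_i] ([sqdist_incr_bound]). *)
Definition remainder_majorant n p R0 Mphi K t (q : pt) : R :=
  Mphi * t^2 * ind (square R0) q +
  K * Rabs t *
    lsum (pairsC n) (fun ab => ind (strip p (fst ab) (snd ab) ((8 * R0 + 2) * Rabs t) R0) q).

Section Majorant.

Variables (Q : pt -> Prop) (phi : pt -> R) (n : nat) (p : nat -> pt) (i : nat).
Variables (e1 e2 t R0 Mphi : R).
Hypotheses (Hn : (2 <= n)%nat) (Hi : (i < n)%nat).
Hypotheses (HB : forall q, Q q -> square R0 q) (Hpi : Q (p i)).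
Hypotheses (He1 : Rabs e1 <= 1) (He2 : Rabs e2 <= 1) (Ht : Rabs t <= 1).
Hypotheses (HR0 : 0 <= R0) (HM : 0 <= Mphi) (Hphi : forall q, Q q -> Rabs (phi q) <= Mphi).

Local Notation K := (Mphi * ((8 * R0 + 2) + 4 * INR n * R0)).
Local Notation w := ((8 * R0 + 2) * Rabs t).
Local Notation strips q := (lsum (pairsC n) (fun ab => ind (strip p (fst ab) (snd ab) w R0) q)).

Lemma remainder_majorant_ge q :
  Mphi * t^2 * ind (square R0) q <= remainder_majorant n p R0 Mphi K t q /\
  K * Rabs t * strips q <= remainder_majorant n p R0 Mphi K t q.
Proof.
  assert (HK : 0 <= K).
  { apply Rmult_le_pos; auto. assert (0 <= INR n * R0) by (apply Rmult_le_pos; auto using pos_INR).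
    lra. }
  assert (0 <= Mphi * t^2 * ind (square R0) q)
    by (apply Rmult_le_pos; [apply Rmult_le_pos, pow2_ge_0 | apply ind_01]; auto).
  assert (0 <= K * Rabs t * strips q).
  { apply Rmult_le_pos; [apply Rmult_le_pos, Rabs_pos; auto|].
    apply lsum_nonneg. intros; apply ind_01. }
  unfold remainder_majorant. lra.
Qed.

Lemma remainder_le_majorant_strip q a b : Q q -> (a < b < n)%nat ->
  Rabs (sqdist p a q - sqdist p b q) <= w ->
  Rabs (remainder Q phi n p i e1 e2 t q) <= remainder_majorant n p R0 Mphi K t q.
Proof.
  intros HQ Hab Hs.
  assert (Hw := sqdist_incr_bound p i e1 e2 t q R0 (HB q HQ) (HB _ Hpi) He1 He2 Ht).
  assert (T : 1 <= strips q).
  { rewrite <- (ind_1 (strip p a b w R0) q) by (split; auto).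
    apply (lsum_ge_term (pairsC n) (fun ab => ind (strip p (fst ab) (snd ab) w R0) q) (a,b)).
    - apply in_pairsC; auto.
    - intros; apply ind_01. }
  eapply Rle_trans; [apply (remainder_lipschitz Q phi n p i e1 e2 t q R0 Mphi); auto|].
  apply (Rle_trans _ (K * Rabs t * strips q)); [|apply remainder_majorant_ge].
  assert (Mphi * (Rabs (sqdist_incr p i e1 e2 t q) / 2) <= Mphi * w)
    by (apply Rmult_le_compat_l; generalize (Rabs_pos (sqdist_incr p i e1 e2 t q)); lra).
  assert (0 <= K * Rabs t).
  { apply Rmult_le_pos, Rabs_pos. apply Rmult_le_pos; auto.
    assert (0 <= INR n * R0) by (apply Rmult_le_pos; auto using pos_INR). lra. }
  assert (Mphi * w + Rabs t * (INR n * (4 * R0 * Mphi)) = K * Rabs t) by ring.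
  nra.
Qed.

Lemma remainder_le_majorant_separated q : Q q ->
  (forall a b, (a < b < n)%nat -> w < Rabs (sqdist p a q - sqdist p b q)) ->
  Rabs (remainder Q phi n p i e1 e2 t q) <= remainder_majorant n p R0 Mphi K t q.
Proof.
  intros HQ Hg.
  assert (Hw := sqdist_incr_bound p i e1 e2 t q R0 (HB q HQ) (HB _ Hpi) He1 He2 Ht).
  eapply Rle_trans; [apply (remainder_separated Q phi n p i e1 e2 t q w); auto|].
  apply (Rle_trans _ (Mphi * t^2 * ind (square R0) q)); [|apply remainder_majorant_ge].
  rewrite (ind_1 (square R0)), Rmult_1_r by auto.
  assert (e1^2 + e2^2 <= 2) by (apply Rabs_le_between in He1, He2; nra).
  assert (0 <= t ^ 2 * (e1 ^ 2 + e2 ^ 2) / 2 <= t^2)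
    by (generalize (pow2_ge_0 t) (pow2_ge_0 e1) (pow2_ge_0 e2); nra).
  apply Rmult_le_compat; auto using Rabs_pos; lra.
Qed.

(* A point of Q is either in the strip of some pair or far from all bisectors. *)
Lemma remainder_le_majorant q :
  Rabs (remainder Q phi n p i e1 e2 t q) <= remainder_majorant n p R0 Mphi K t q.
Proof.
  destruct (classic (Q q)) as [HQ|HQ].
  2:{ rewrite remainder_out, Rabs_R0 by auto.
      apply (Rle_trans _ (Mphi * t^2 * ind (square R0) q)); [|apply remainder_majorant_ge].
      apply Rmult_le_pos; [apply Rmult_le_pos, pow2_ge_0; auto | apply ind_01]. }
  destruct (classic (exists a b, (a < b < n)%nat /\ Rabs (sqdist p a q - sqdist p b q) <= w))
    as [(a & b & Hab & Hs)|Hs].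
  - apply (remainder_le_majorant_strip q a b); auto.
  - apply remainder_le_majorant_separated; auto.
    intros a b Hab. apply Rnot_le_lt. intro Hc. apply Hs. exists a, b. auto.
Qed.

End Majorant.

(** * Areas of strips *)

Lemma Rabs_affine_le k c y del : k <> 0 -> Rabs (k * y + c) <= del ->
  - c / k - del / Rabs k <= y <= - c / k + del / Rabs k.
Proof.
  intros Hk H. assert (Hk' : 0 < Rabs k) by (apply Rabs_pos_lt; auto).
  assert (E : Rabs (y - - c / k) = Rabs (k * y + c) / Rabs k).
  { rewrite <- Rabs_div by auto. f_equal. field. auto. }
  assert (Rabs (y - - c / k) <= del / Rabs k).
  { rewrite E. unfold Rdiv. apply Rmult_le_compat_r; [left; apply Rinv_0_lt_compat|]; auto. }
  apply Rabs_le_between in H0. lra.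
Qed.

Lemma ind_le_ind_itv (S : pt -> Prop) x y s t z : (S (x,y) -> s <= z <= t) ->
  ind S (x,y) * 1 <= ind_itv s t z.
Proof.
  intros H. destruct (classic (S (x,y))) as [Hs|Hs].
  - rewrite ind_1 by auto. specialize (H Hs). unfold ind_itv. case_Rle; lra.
  - rewrite ind_0 by auto. unfold ind_itv. case_Rle; lra.
Qed.

Lemma strip_area_y (S : pt -> Prop) al be ga R0 del I : 0 <= R0 -> 0 <= del -> be <> 0 ->
  (forall x y, S (x,y) -> Rabs (be * y + (al * x + ga)) <= del) ->
  box_int (-R0) R0 (-R0) R0 (fun q => ind S q * 1) I -> I <= 2 * R0 * (2 * (del / Rabs be)).
Proof.
  intros HR Hd Hbe HS HI. set (w := del / Rabs be).
  assert (Hw : 0 <= w) by (unfold w; apply Rdiv_le_0_compat; auto; apply Rabs_pos_lt; auto).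
  eapply Rle_trans; [apply (box_int_le_outer _ _ _ _ _ _ (fun _ => 2 * w) HI)|].
  - intros x Hx. set (y0 := - (al * x + ga) / be).
    apply Rle_trans with (RInt (ind_itv (y0 - w) (y0 + w)) (-R0) R0).
    + apply RInt_le; [lra | apply HI; auto | apply RInt_ind_itv; lra|].
      intros y _. apply ind_le_ind_itv. intros Hs. apply Rabs_affine_le; [auto | apply (HS x y Hs)].
    + destruct (RInt_ind_itv (-R0) R0 (y0 - w) (y0 + w)); lra.
  - apply ex_RInt_const.
  - rewrite RInt_cst. lra.
Qed.

Lemma strip_area_x (S : pt -> Prop) al ga R0 del I : 0 <= R0 -> 0 <= del -> al <> 0 ->
  (forall x y, S (x,y) -> Rabs (al * x + ga) <= del) ->
  box_int (-R0) R0 (-R0) R0 (fun q => ind S q * 1) I -> I <= 2 * R0 * (2 * (del / Rabs al)).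
Proof.
  intros HR Hd Hal HS HI. set (w := del / Rabs al). set (x0 := - ga / al).
  assert (Hw : 0 <= w) by (unfold w; apply Rdiv_le_0_compat; auto; apply Rabs_pos_lt; auto).
  destruct (RInt_ind_itv (-R0) R0 (x0 - w) (x0 + w)) as [X B]; try lra.
  eapply Rle_trans;
    [apply (box_int_le_outer _ _ _ _ _ _ (fun x => 2 * R0 * ind_itv (x0 - w) (x0 + w) x) HI)|].
  - intros x Hx. eapply Rle_trans.
    + apply (RInt_le _ (fun _ => ind_itv (x0 - w) (x0 + w) x)); [lra | apply HI; auto |
        apply ex_RInt_const|].
      intros y _. apply ind_le_ind_itv. intros Hs. apply Rabs_affine_le; [auto | apply (HS x y Hs)].
    + rewrite RInt_cst. lra.
  - apply (ex_RInt_scal (ind_itv (x0 - w) (x0 + w))). exact X.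
  - rewrite (RInt_scal (ind_itv (x0 - w) (x0 + w))) by exact X.
    unfold scal; simpl; unfold mult; simpl. apply Rmult_le_compat_l; lra.
Qed.

Lemma strip_area p a b R0 : 0 <= R0 -> p a <> p b ->
  exists C, 0 <= C /\ forall del I, 0 <= del ->
    box_int (-R0) R0 (-R0) R0 (fun q => ind (strip p a b del R0) q * 1) I -> I <= C * del.
Proof.
  intros HR Hne.
  set (al := 2 * (fst (p b) - fst (p a))). set (be := 2 * (snd (p b) - snd (p a))).
  set (ga := fst (p a) ^ 2 + snd (p a) ^ 2 - fst (p b) ^ 2 - snd (p b) ^ 2).
  assert (E : forall x y, sqdist p a (x,y) - sqdist p b (x,y) = be * y + (al * x + ga))
    by (intros; unfold sqdist, al, be, ga; simpl; ring).
  destruct (Req_dec be 0) as [Hbe|Hbe].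
  - assert (Hal : al <> 0).
    { intro Hal. apply Hne. unfold al, be in *. apply injective_projections; lra. }
    exists (4 * R0 / Rabs al). split; [apply Rdiv_le_0_compat; [lra | apply Rabs_pos_lt; auto]|].
    intros del I Hd HI.
    eapply Rle_trans; [apply (strip_area_x (strip p a b del R0) al ga R0 del I); auto|].
    + intros x y [_ Hs]. rewrite E, Hbe in Hs. replace (al * x + ga) with (0 * y + (al * x + ga))
        by ring. exact Hs.
    + apply Req_le. field. apply Rabs_no_R0. auto.
  - exists (4 * R0 / Rabs be). split; [apply Rdiv_le_0_compat; [lra | apply Rabs_pos_lt; auto]|].
    intros del I Hd HI.
    eapply Rle_trans; [apply (strip_area_y (strip p a b del R0) al be ga R0 del I); auto|].
    + intros x y [_ Hs]. rewrite <- E. exact Hs.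
    + apply Req_le. field. apply Rabs_no_R0. auto.
Qed.

Lemma strips_area p R0 (l : list (nat * nat)) : 0 < R0 ->
  (forall ab, In ab l -> p (fst ab) <> p (snd ab)) ->
  exists C, 0 <= C /\ forall del, 0 <= del -> exists I,
    box_int (-R0) R0 (-R0) R0
      (fun q => lsum l (fun ab => ind (strip p (fst ab) (snd ab) del R0) q)) I /\ I <= C * del.
Proof.
  intros HR. induction l as [|[a b] l IH]; intros Hl.
  - exists 0. split; [lra|]. intros del Hd. exists 0. split; [apply box_int_0; lra | lra].
  - destruct IH as [Cs [HCs HI]]; [intros ab Hab; apply Hl; right; auto|].
    destruct (strip_area p a b R0 ltac:(lra) (Hl (a,b) (or_introl eq_refl))) as [C [HC HCb]].
    exists (C + Cs). split; [lra|]. intros del Hd.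
    destruct (HI del Hd) as [Is [HIs HIs']].
    destruct (box_int_convex (strip p a b del R0) (fun _ => 1) (-R0) R0 (-R0) R0) as [I1 HI1];
      try lra; [apply strip_convex | intros x y [[H1 H2] _]; auto | apply jcont_const|].
    exists (I1 + 1 * Is). split.
    + apply box_int_ext with (fun q => ind (strip p a b del R0) q * 1 +
        1 * lsum l (fun ab => ind (strip p (fst ab) (snd ab) del R0) q)); [intros q; simpl; ring|].
      apply box_int_lin; auto.
    + specialize (HCb del I1 Hd HI1). lra.
Qed.

Lemma square_area R0 : 0 < R0 ->
  exists I, box_int (-R0) R0 (-R0) R0 (fun q => ind (square R0) q * 1) I /\
    I <= (2 * R0) * (2 * R0).
Proof.
  intros HR.
  destruct (box_int_convex (square R0) (fun _ => 1) (-R0) R0 (-R0) R0) as [I HI]; try lra;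
    [apply square_convex | intros x y H; exact H | apply jcont_const |].
  exists I. split; auto.
  eapply Rle_trans; [apply (box_int_le_outer _ _ _ _ _ _ (fun _ => 2 * R0) HI)|].
  - intros x Hx. eapply Rle_trans.
    + apply (RInt_le _ (fun _ => 1)); [lra | apply HI; auto | apply ex_RInt_const|].
      intros y _. generalize (ind_01 (square R0) (x,y)). lra.
    + rewrite RInt_cst. lra.
  - apply ex_RInt_const.
  - rewrite RInt_cst. lra.
Qed.

(** * The directional derivative of H *)

Definition moment_x Q phi n p i j : R := integral_on (V2 Q n p i j) (fun q => fst q * phi q).
Definition moment_y Q phi n p i j : R := integral_on (V2 Q n p i j) (fun q => snd q * phi q).

Definition dir_derivative Q phi n p i e1 e2 : R :=
  lsum (others n i) (fun j => (e1 * fst (p i) + e2 * snd (p i)) * mass Q phi n p i j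
    + - e1 * moment_x Q phi n p i j + - e2 * moment_y Q phi n p i j).

Lemma derivable_pt_lim_quadratic (F : R -> R) G K :
  (forall t, Rabs t <= 1 -> Rabs (F t - F 0 - t * G) <= K * t^2) -> derivable_pt_lim F 0 G.
Proof.
  intros HK eps Heps.
  assert (HK0 : 0 <= K).
  { specialize (HK 1 ltac:(rewrite Rabs_R1; lra)). generalize (Rabs_pos (F 1 - F 0 - 1 * G)).
    simpl in HK. lra. }
  assert (Hd0 : 0 < Rmin 1 (eps / (K + 1))) by (apply Rmin_pos; [lra|apply Rdiv_lt_0_compat; lra]).
  exists (mkposreal _ Hd0). simpl. intros h Hh0 Hh.
  assert (Hh1 : Rabs h <= 1) by (left; eapply Rlt_le_trans; [exact Hh|apply Rmin_l]).
  assert (Hh2 : Rabs h < eps / (K + 1)) by (eapply Rlt_le_trans; [exact Hh|apply Rmin_r]).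
  specialize (HK h Hh1). rewrite Rplus_0_l.
  replace ((F h - F 0) / h - G) with ((F h - F 0 - h * G) / h) by (field; auto).
  assert (Ha : 0 < Rabs h) by (apply Rabs_pos_lt; auto).
  unfold Rdiv. rewrite Rabs_mult, Rabs_inv.
  apply Rmult_lt_reg_r with (Rabs h); auto. rewrite Rmult_assoc, Rinv_l, Rmult_1_r by lra.
  assert (Rabs h * Rabs h = h^2) by (rewrite <- Rabs_mult, Rabs_right; [ring | nra]).
  assert (K * Rabs h < eps).
  { apply Rle_lt_trans with ((K + 1) * Rabs h); [nra|].
    apply Rmult_lt_reg_r with (/ (K + 1)); [apply Rinv_0_lt_compat; lra|].
    replace ((K + 1) * Rabs h * / (K + 1)) with (Rabs h) by (field; lra). exact Hh2. }
  nra.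
Qed.

Section Derivative.

Variables (Q : pt -> Prop) (phi : pt -> R) (n : nat) (p : nat -> pt) (i : nat) (e1 e2 R0 : R).
Hypotheses (HQ : is_convex_polygon Q) (Hphi : continuous2 phi) (Hn : (2 <= n)%nat).
Hypotheses (Hp : forall k, (k < n)%nat -> Q (p k))
  (Hinj : forall k l, (k < n)%nat -> (l < n)%nat -> k <> l -> p k <> p l) (Hi : (i < n)%nat).
Hypotheses (He1 : Rabs e1 <= 1) (He2 : Rabs e2 <= 1).
Hypotheses (HR0 : 0 < R0) (HQR : forall q, Q q -> square R0 q).

Lemma box_int_H p' :
  box_int (-R0) R0 (-R0) R0 (fun q => ind Q q * (minC n p' q * phi q)) (H Q phi n p').
Proof.
  apply integral_on_box_int; auto using polygon_convex; [lra|].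
  apply jcont_mult; auto using jcont_minC, continuous2_jcont.
Qed.

Lemma box_int_V2 j g : jcont g ->
  box_int (-R0) R0 (-R0) R0 (fun q => ind (V2 Q n p i j) q * g q) (integral_on (V2 Q n p i j) g).
Proof.
  intros hg. apply integral_on_box_int; auto; [lra | apply V2_convex, polygon_convex; auto |].
  intros q [Hq _]. auto.
Qed.

Lemma box_int_deriv_integrand :
  box_int (-R0) R0 (-R0) R0 (deriv_integrand Q phi n p i e1 e2) (dir_derivative Q phi n p i e1 e2).
Proof.
  assert (hphi := continuous2_jcont phi Hphi).
  apply box_int_lsum; try lra. intros j _.
  set (V := V2 Q n p i j). set (c := e1 * fst (p i) + e2 * snd (p i)).
  apply box_int_ext with (fun q => (c * (ind V q * phi q) + - e1 * (ind V q * (fst q * phi q)))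
                                   + - e2 * (ind V q * (snd q * phi q))).
  { intros q. unfold c, half_sqdist_deriv. ring. }
  apply box_int_lin; [apply box_int_lin|].
  - apply box_int_scal, box_int_V2; auto.
  - apply box_int_V2, jcont_mult; auto using jcont_fst.
  - apply box_int_V2, jcont_mult; auto using jcont_snd.
Qed.

Lemma box_int_remainder t : box_int (-R0) R0 (-R0) R0 (remainder Q phi n p i e1 e2 t)
  (H Q phi n (shift p i e1 e2 t) - H Q phi n p - t * dir_derivative Q phi n p i e1 e2).
Proof.
  replace (H Q phi n (shift p i e1 e2 t) - H Q phi n p - t * dir_derivative Q phi n p i e1 e2) with
    ((H Q phi n (shift p i e1 e2 t) + (-1) * H Q phi n p) + (-t) * dir_derivative Q phi n p i e1 e2)
    by ring.
  apply box_int_ext with (fun q =>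
    (ind Q q * (minC n (shift p i e1 e2 t) q * phi q) + (-1) * (ind Q q * (minC n p q * phi q)))
    + (-t) * deriv_integrand Q phi n p i e1 e2 q); [intros q; unfold remainder; ring|].
  apply box_int_lin; [apply box_int_lin|]; auto using box_int_H, box_int_deriv_integrand.
Qed.

Lemma remainder_quadratic : exists K, forall t, Rabs t <= 1 ->
  Rabs (H Q phi n (shift p i e1 e2 t) - H Q phi n p - t * dir_derivative Q phi n p i e1 e2)
    <= K * t^2.
Proof.
  destruct (jcont_bounded phi (-R0) R0 (-R0) R0 (continuous2_jcont phi Hphi)) as [Mphi [HM0 HM]].
  assert (HMQ : forall q, Q q -> Rabs (phi q) <= Mphi).
  { intros [x y] Hq. destruct (HQR _ Hq). apply HM; auto. }
  destruct (strips_area p R0 (pairsC n) HR0) as [Cs [HCs HIs]].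
  { intros [a b] Hab. apply in_pairsC in Hab. apply Hinj; simpl; lia. }
  destruct (square_area R0 HR0) as [Ib [HIb HIb']].
  set (c3 := 8 * R0 + 2). set (K2 := Mphi * (c3 + 4 * INR n * R0)).
  assert (HK2 : 0 <= K2).
  { unfold K2, c3. apply Rmult_le_pos; auto.
    assert (0 <= INR n * R0) by (apply Rmult_le_pos; [apply pos_INR | lra]). lra. }
  exists (Mphi * ((2 * R0) * (2 * R0)) + K2 * Cs * c3). intros t Ht.
  assert (Hw : 0 <= c3 * Rabs t) by (unfold c3; generalize (Rabs_pos t); nra).
  destruct (HIs (c3 * Rabs t) Hw) as [Is [HIs1 HIs2]].
  assert (Maj : box_int (-R0) R0 (-R0) R0 (remainder_majorant n p R0 Mphi K2 t)
                  ((Mphi * t^2) * Ib + (K2 * Rabs t) * Is)).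
  { apply box_int_ext with (fun q => (Mphi * t^2) * (ind (square R0) q * 1) + (K2 * Rabs t) *
      lsum (pairsC n) (fun ab => ind (strip p (fst ab) (snd ab) (c3 * Rabs t) R0) q));
      [intros q; unfold remainder_majorant, c3; ring|].
    apply box_int_lin; [apply box_int_scal|]; auto. }
  assert (Pt : forall q, Rabs (remainder Q phi n p i e1 e2 t q) <=
                         remainder_majorant n p R0 Mphi K2 t q)
    by (apply remainder_le_majorant; auto; lra).
  assert (Pt' : forall q, - remainder_majorant n p R0 Mphi K2 t q <= remainder Q phi n p i e1 e2 t q
                          <= remainder_majorant n p R0 Mphi K2 t q)
    by (intros q; apply Rabs_le_between, Pt).
  assert (Up := box_int_le _ _ _ _ _ _ _ _ (box_int_remainder t) Maj (fun q => proj2 (Pt' q))).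
  assert (Low := box_int_le _ _ _ _ _ _ _ _ (box_int_scal _ _ _ _ _ _ (-1) Maj)
                   (box_int_remainder t)
                   (fun q => ltac:(generalize (Pt' q); lra))).
  assert (Mphi * t ^ 2 * Ib <= Mphi * t^2 * ((2 * R0) * (2 * R0)))
    by (apply Rmult_le_compat_l; auto; apply Rmult_le_pos; auto; apply pow2_ge_0).
  assert (K2 * Rabs t * Is <= K2 * Rabs t * (Cs * (c3 * Rabs t)))
    by (apply Rmult_le_compat_l; auto; apply Rmult_le_pos; auto; apply Rabs_pos).
  assert (Ht2 : Rabs t * Rabs t = t^2) by (rewrite <- Rabs_mult, Rabs_right; [ring | nra]).
  assert (K2 * Rabs t * (Cs * (c3 * Rabs t)) = K2 * Cs * c3 * t^2)
    by (rewrite <- Ht2; ring).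
  apply Rabs_le. lra.
Qed.

End Derivative.

Lemma derivable_H_shift Q phi n p i e1 e2 : is_convex_polygon Q -> continuous2 phi ->
  (2 <= n)%nat -> (forall k, (k < n)%nat -> Q (p k)) ->
  (forall k l, (k < n)%nat -> (l < n)%nat -> k <> l -> p k <> p l) -> (i < n)%nat ->
  Rabs e1 <= 1 -> Rabs e2 <= 1 ->
  derivable_pt_lim (fun t => H Q phi n (shift p i e1 e2 t)) 0 (dir_derivative Q phi n p i e1 e2).
Proof.
  intros HQ Hphi Hn Hp Hinj Hi He1 He2.
  destruct (polygon_bounded Q HQ) as [R0 [HR0 HQR]].
  destruct (remainder_quadratic Q phi n p i e1 e2 R0) as [K HK]; auto.
  apply (derivable_pt_lim_quadratic _ _ K). rewrite shift_0. exact HK.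
Qed.

(** * Centroids *)

Section Moments.

Variables (S : pt -> Prop) (R0 : R).
Hypotheses (HR0 : 0 <= R0) (HS : convex S) (HSR : forall q, S q -> square R0 q).

Lemma integral_on_scal g l : jcont g -> integral_on S (fun q => l * g q) = l * integral_on S g.
Proof.
  intros hg.
  apply (box_int_unique (-R0) R0 (-R0) R0 (-R0) R0 (-R0) R0 (fun q => ind S q * (l * g q))).
  - apply integral_on_box_int; auto. apply jcont_mult; auto using jcont_const.
  - apply box_int_ext with (fun q => l * (ind S q * g q)); [intros; ring|].
    apply box_int_scal, integral_on_box_int; auto.
Qed.

Lemma integral_on_abs_le g h : jcont g -> jcont h -> (forall q, S q -> Rabs (g q) <= h q) ->
  Rabs (integral_on S g) <= integral_on S h.
Proof.
  intros hg hh Hgh.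
  assert (Ig := integral_on_box_int S g R0 HR0 HS HSR hg).
  assert (Ih := integral_on_box_int S h R0 HR0 HS HSR hh).
  assert (Pt : forall q, - (ind S q * h q) <= ind S q * g q <= ind S q * h q).
  { intros q. destruct (classic (S q)) as [Hq|Hq].
    - rewrite ind_1 by auto. specialize (Hgh q Hq). apply Rabs_le_between in Hgh. lra.
    - rewrite ind_0 by auto. lra. }
  apply Rabs_le. split.
  - assert (L := box_int_le _ _ _ _ _ _ _ _ (box_int_scal _ _ _ _ _ _ (-1) Ih) Ig
                   (fun q => ltac:(generalize (Pt q); lra))). lra.
  - exact (box_int_le _ _ _ _ _ _ _ _ Ig Ih (fun q => proj2 (Pt q))).
Qed.

End Moments.

Lemma moments_mass_zero Q phi n p i j : is_convex_polygon Q -> continuous2 phi ->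
  (forall q, Q q -> 0 <= phi q) -> mass Q phi n p i j = 0 ->
  moment_x Q phi n p i j = 0 /\ moment_y Q phi n p i j = 0.
Proof.
  intros HQ Hphi Hpos Hm. assert (hphi := continuous2_jcont phi Hphi).
  destruct (polygon_bounded Q HQ) as [R0 [HR0 HQR]].
  assert (HV : convex (V2 Q n p i j)) by (apply V2_convex, polygon_convex; auto).
  assert (HVR : forall q, V2 Q n p i j q -> square R0 q) by (intros q [Hq _]; auto).
  assert (Bound : forall g, jcont g -> (forall q, Q q -> Rabs (g q) <= R0 * phi q) ->
                  integral_on (V2 Q n p i j) g = 0).
  { intros g hg Hg. apply Rabs_eq_0, Rle_antisym; [|apply Rabs_pos].
    eapply Rle_trans.
    - apply (integral_on_abs_le _ R0 ltac:(lra) HV HVR g (fun q => R0 * phi q)); auto.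
      + apply jcont_mult; auto using jcont_const.
      + intros q [Hq _]. auto.
    - rewrite (integral_on_scal _ R0); auto; try lra. unfold mass in Hm. rewrite Hm. lra. }
  split; apply Bound; try (apply jcont_mult; auto using jcont_fst, jcont_snd);
    intros q Hq; rewrite Rabs_mult, (Rabs_right (phi q)) by (apply Rle_ge; auto);
    apply Rmult_le_compat_r; auto; destruct (HQR q Hq); apply Rabs_le; lra.
Qed.

Lemma mass_centroid Q phi n p i j : is_convex_polygon Q -> continuous2 phi ->
  (forall q, Q q -> 0 <= phi q) ->
  vscal (mass Q phi n p i j) (centroid Q phi n p i j) =
  (moment_x Q phi n p i j, moment_y Q phi n p i j).
Proof.
  intros HQ Hphi Hpos. unfold centroid, vscal; simpl.
  fold (moment_x Q phi n p i j) (moment_y Q phi n p i j).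
  destruct (Req_dec (mass Q phi n p i j) 0) as [Z|Z].
  - destruct (moments_mass_zero Q phi n p i j) as [-> ->]; auto. rewrite Z. f_equal; ring.
  - f_equal; field; auto.
Qed.

Lemma fst_sumV l F : fst (sumV l F) = lsum l (fun j => fst (F j)).
Proof. induction l as [|x l IH]; simpl; auto. rewrite <- IH. reflexivity. Qed.

Lemma snd_sumV l F : snd (sumV l F) = lsum l (fun j => snd (F j)).
Proof. induction l as [|x l IH]; simpl; auto. rewrite <- IH. reflexivity. Qed.

Lemma lsum_mul_sub l (m X : nat -> R) c :
  lsum l (fun j => m j * c - X j) = lsum l m * c - lsum l X.
Proof. induction l as [|a l IH]; simpl; [ring|]. rewrite IH. ring. Qed.

Lemma vopp_sumV_moment l (m : nat -> R) (C : nat -> pt) v :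
  vopp (sumV l (fun j => vscal (m j) (vsub (C j) v))) =
  (lsum l (fun j => m j * fst v - m j * fst (C j)),
   lsum l (fun j => m j * snd v - m j * snd (C j))).
Proof.
  induction l as [|a l IH]; unfold vopp, vscal, vadd, vsub in *; simpl in *; [f_equal; ring|].
  injection IH as IH1 IH2. rewrite <- IH1, <- IH2. f_equal; ring.
Qed.

Definition grad_H Q phi n p i : pt :=
  (lsum (others n i) (fun j => mass Q phi n p i j * fst (p i) - moment_x Q phi n p i j),
   lsum (others n i) (fun j => mass Q phi n p i j * snd (p i) - moment_y Q phi n p i j)).

Lemma dir_derivative_grad_H Q phi n p i e1 e2 :
  dir_derivative Q phi n p i e1 e2 = e1 * fst (grad_H Q phi n p i) + e2 * snd (grad_H Q phi n p i).
Proof.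
  unfold dir_derivative, grad_H; simpl. induction (others n i) as [|a l IH]; simpl; [ring|].
  rewrite IH. ring.
Qed.

Section Centroids.

Variables (Q : pt -> Prop) (phi : pt -> R) (n : nat) (p : nat -> pt) (i : nat).
Hypotheses (HQ : is_convex_polygon Q) (Hphi : continuous2 phi) (Hpos : forall q, Q q -> 0 <= phi q).

Lemma grad_H_centroids :
  vopp (sumV (others n i)
    (fun j => vscal (mass Q phi n p i j) (vsub (centroid Q phi n p i j) (p i))))
  = grad_H Q phi n p i.
Proof.
  rewrite vopp_sumV_moment. unfold grad_H.
  f_equal; apply lsum_ext; intros j _; f_equal;
    generalize (mass_centroid Q phi n p i j HQ Hphi Hpos);
    unfold vscal; intros E; injection E; auto.
Qed.

Lemma grad_H_centroidW : 0 < massW Q phi n p i ->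
  vopp (vscal (massW Q phi n p i) (vsub (centroidW Q phi n p i) (p i))) = grad_H Q phi n p i.
Proof.
  intros HmW. unfold centroidW, grad_H.
  set (Sv := sumV (others n i) (fun j => vscal (mass Q phi n p i j) (centroid Q phi n p i j))).
  assert (E : forall j, vscal (mass Q phi n p i j) (centroid Q phi n p i j) =
                        (moment_x Q phi n p i j, moment_y Q phi n p i j))
    by (intros; apply mass_centroid; auto).
  assert (Ex : fst Sv = lsum (others n i) (moment_x Q phi n p i))
    by (unfold Sv; rewrite fst_sumV; apply lsum_ext; intros j _; rewrite E; reflexivity).
  assert (Ey : snd Sv = lsum (others n i) (moment_y Q phi n p i))
    by (unfold Sv; rewrite snd_sumV; apply lsum_ext; intros j _; rewrite E; reflexivity).
  unfold vopp, vscal, vsub. cbn [fst snd]. rewrite Ex, Ey, !lsum_mul_sub.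
  unfold massW, sumR in *. fold (lsum (others n i) (mass Q phi n p i)) in *.
  f_equal; field; lra.
Qed.

End Centroids.

Theorem mainTheorem4 (Q : pt -> Prop) (phi : pt -> R) (n : nat) (p : nat -> pt) (i : nat) :
  is_convex_polygon Q ->
  C2_2 phi ->
  (forall q, Q q -> 0 <= phi q) ->
  (3 <= n)%nat ->
  (forall k, (k < n)%nat -> Q (p k)) ->
  (forall k l, (k < n)%nat -> (l < n)%nat -> k <> l -> p k <> p l) ->
  (i < n)%nat ->
  0 < massW Q phi n p i ->
  let G := vopp (sumV (others n i)
             (fun j => vscal (mass Q phi n p i j) (vsub (centroid Q phi n p i j) (p i)))) in
  derivable_pt_lim (fun t => H Q phi n (upd p i (vadd (p i) (t, 0)))) 0 (fst G) /\
  derivable_pt_lim (fun t => H Q phi n (upd p i (vadd (p i) (0, t)))) 0 (snd G) /\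
  G = vopp (vscal (massW Q phi n p i) (vsub (centroidW Q phi n p i) (p i))).
Proof.
  intros HQ HC2 Hpos Hn Hp Hinj Hi HmW G.
  assert (Hphi : continuous2 phi) by (destruct HC2 as (? & ? & _ & _ & ? & _); auto).
  assert (HG : G = grad_H Q phi n p i) by (apply grad_H_centroids; auto).
  assert (Hder : forall e1 e2, Rabs e1 <= 1 -> Rabs e2 <= 1 ->
    derivable_pt_lim (fun t => H Q phi n (shift p i e1 e2 t)) 0 (e1 * fst G + e2 * snd G)).
  { intros e1 e2 He1 He2. rewrite HG, <- dir_derivative_grad_H.
    apply derivable_H_shift; auto. lia. }
  assert (Axis : forall e1 e2 v, (forall t, v t = (t * e1, t * e2)) ->
    (fun t => H Q phi n (upd p i (vadd (p i) (v t)))) = (fun t => H Q phi n (shift p i e1 e2 t)))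
    by (intros e1 e2 v Hv; apply functional_extensionality; intros t; rewrite Hv; reflexivity).
  rewrite (Axis 1 0 (fun t => (t, 0))), (Axis 0 1 (fun t => (0, t)))
    by (intros t; f_equal; ring).
  split; [|split].
  - replace (fst G) with (1 * fst G + 0 * snd G) by ring.
    apply Hder; rewrite ?Rabs_R1, ?Rabs_R0; lra.
  - replace (snd G) with (0 * fst G + 1 * snd G) by ring.
    apply Hder; rewrite ?Rabs_R1, ?Rabs_R0; lra.
  - rewrite HG, grad_H_centroidW; auto.
Qed.
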